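(* There exists an $8$-rep-tile $A\subset\mathbb{R}^3$ which has a hole in the following sense: $A$ is homeomorphic to a solid torus $D^2\times S^1$, and its interior is connected and homeomorphic to an open solid torus. More concretely, $A$ can be chosen as a union of four rectangular boxes, each congruent to $[0,4]\times[0,2]\times[0,1]$, with pairwise disjoint interiors, such that $A$ together with a copy of $A$ rotated by $180^\circ$ forms a rectangular box of size $8\times 4\times 2$. Moreover, eight copies of $A$ assemble to $2A$.
   Context: A closed bounded set $A\subset\mathbb{R}^d$ with non-empty interior is called an $m$-rep-tile if there are sets $A_1,\dots,A_m$, each congruent to $A$, such that any two different $A_j,A_k$ have no common interior points and the union $A_1\cup\dots\cup A_m$ is geometrically similar to $A$. Two sets are congruent if one is the image of the other under an isometry of $\mathbb{R}^d$. *)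

From Stdlib Require Import Reals Lra.
Open Scope R_scope.

Record P3 := mkP3 { p3x : R; p3y : R; p3z : R }.
Record P4 := mkP4 { p4a : R; p4b : R; p4c : R; p4d : R }.

Definition dist3 (p q : P3) : R :=
  sqrt ((p3x p - p3x q)^2 + (p3y p - p3y q)^2 + (p3z p - p3z q)^2).
Definition dist4 (p q : P4) : R :=
  sqrt ((p4a p - p4a q)^2 + (p4b p - p4b q)^2 + (p4c p - p4c q)^2
        + (p4d p - p4d q)^2).

Definition set3 := P3 -> Prop.
Definition set4 := P4 -> Prop.

Definition set_eq3 (A B : set3) : Prop := forall p, A p <-> B p.

Definition image3 (f : P3 -> P3) (A : set3) : set3 :=
  fun q => exists p, A p /\ q = f p.

Definition ball3 (c : P3) (r : R) : set3 := fun p => dist3 c p < r.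
Definition open3 (U : set3) : Prop :=
  forall p, U p -> exists r, 0 < r /\ forall q, ball3 p r q -> U q.
Definition closed3 (A : set3) : Prop := open3 (fun p => ~ A p).
Definition bounded3 (A : set3) : Prop :=
  exists M, forall p, A p -> dist3 (mkP3 0 0 0) p <= M.
Definition interior3 (A : set3) : set3 :=
  fun p => exists r, 0 < r /\ forall q, ball3 p r q -> A q.

Definition connected3 (S : set3) : Prop :=
  forall U V : set3, open3 U -> open3 V ->
    (forall p, S p -> U p \/ V p) ->
    (forall p, S p -> U p -> V p -> False) ->
    (exists p, S p /\ U p) -> (exists p, S p /\ V p) -> False.

Definition isometry3 (f : P3 -> P3) : Prop :=
  forall p q, dist3 (f p) (f q) = dist3 p q.
Definition congruent3 (A B : set3) : Prop :=
  exists f, isometry3 f /\ set_eq3 B (image3 f A).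
Definition similarity3 (f : P3 -> P3) : Prop :=
  exists r, 0 < r /\ forall p q, dist3 (f p) (f q) = r * dist3 p q.
Definition similar3 (A B : set3) : Prop :=
  exists f, similarity3 f /\ set_eq3 B (image3 f A).

Definition rep_tile (m : nat) (A : set3) : Prop :=
  closed3 A /\ bounded3 A /\ (exists p, interior3 A p) /\
  exists Ai : nat -> set3,
    (forall j, (j < m)%nat -> congruent3 A (Ai j)) /\
    (forall j k, (j < m)%nat -> (k < m)%nat -> j <> k ->
        forall p, interior3 (Ai j) p -> interior3 (Ai k) p -> False) /\
    similar3 A (fun p => exists j, (j < m)%nat /\ Ai j p).

Definition homeomorphic34 (S : set3) (T : set4) : Prop :=
  exists (f : P3 -> P4) (g : P4 -> P3),
    (forall p, S p -> T (f p)) /\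
    (forall q, T q -> S (g q)) /\
    (forall p, S p -> g (f p) = p) /\
    (forall q, T q -> f (g q) = q) /\
    (forall p, S p -> forall eps, 0 < eps -> exists delta, 0 < delta /\
        forall p', S p' -> dist3 p p' < delta -> dist4 (f p) (f p') < eps) /\
    (forall q, T q -> forall eps, 0 < eps -> exists delta, 0 < delta /\
        forall q', T q' -> dist4 q q' < delta -> dist3 (g q) (g q') < eps).

(* solid torus D^2 x S^1 and open solid torus (open disc) x S^1,
   realized in R^2 x R^2 = R^4 *)
Definition solid_torus : set4 :=
  fun q => (p4a q)^2 + (p4b q)^2 <= 1 /\ (p4c q)^2 + (p4d q)^2 = 1.
Definition open_solid_torus : set4 :=
  fun q => (p4a q)^2 + (p4b q)^2 < 1 /\ (p4c q)^2 + (p4d q)^2 = 1.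

Definition box (a b c : R) : set3 :=
  fun p => 0 <= p3x p <= a /\ 0 <= p3y p <= b /\ 0 <= p3z p <= c.

(* rotation by 180 degrees about the line through c with unit direction u *)
Definition half_turn (c u : P3) (p : P3) : P3 :=
  let dx := p3x p - p3x c in
  let dy := p3y p - p3y c in
  let dz := p3z p - p3z c in
  let t := dx * p3x u + dy * p3y u + dz * p3z u in
  mkP3 (p3x c + 2 * t * p3x u - dx)
       (p3y c + 2 * t * p3y u - dy)
       (p3z c + 2 * t * p3z u - dz).
Definition unit3 (u : P3) : Prop := (p3x u)^2 + (p3y u)^2 + (p3z u)^2 = 1.

Definition scale3 (k : R) (A : set3) : set3 :=
  fun p => exists q, A q /\ p = mkP3 (k * p3x q) (k * p3y q) (k * p3z q).

From Stdlib Require Import Reals Lra Psatz Classical List Lia.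
From Coquelicot Require Import Coquelicot.
Import ListNotations.
Open Scope R_scope.

(* The tile consists of the two pillars [0,2]x[0,4]x[0,1] and [6,8]x[0,4]x[0,1] joined by
   the two bridges [2,6]x[0,1]x[0,2] and [2,6]x[2,3]x[0,2].  Its half turn about the line
   y = 2, z = 1 fills the rest of the box [0,8]x[0,4]x[0,2]; twice the tile is the union of
   four such boxes, hence of eight copies of the tile.

   Radial rescalings between two box gauges squash a box while fixing a cone; three of them
   flatten the tile onto a rectangular frame of height 1 around the axis x = 4, y = 3/2.  A
   point of the frame is described by its direction around the axis, a level interpolating
   logarithmically between the inner and the outer rectangle, and its height; level and
   height form a square, which is sent radially onto the disc.  This gives the solid torus.
   Interior points of the tile are exactly those sent into the open disc, and two of them are
   joined inside the interior along a segment of the open solid torus, or via a third point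
   when their directions are antipodal. *)

(** * Continuity *)

Definition dR (a b : R) : R := Rabs (b - a).

Definition cont_at {X Y : Type} (dX : X -> X -> R) (dY : Y -> Y -> R)
  (f : X -> Y) (x : X) : Prop :=
  forall eps, 0 < eps ->
    exists del, 0 < del /\ forall x', dX x x' < del -> dY (f x) (f x') < eps.

Lemma cont_at_comp {X Y Z : Type} (dX : X -> X -> R) (dY : Y -> Y -> R)
  (dZ : Z -> Z -> R) (f : X -> Y) (g : Y -> Z) x :
  cont_at dX dY f x -> cont_at dY dZ g (f x) -> cont_at dX dZ (fun x' => g (f x')) x.
Proof.
  intros Hf Hg eps He.
  destruct (Hg eps He) as [d1 [Hd1 H1]]; destruct (Hf d1 Hd1) as [d2 [Hd2 H2]].
  exists d2; auto.
Qed.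

Lemma Rabs_Rmax_sub a b c d :
  Rabs (Rmax a b - Rmax c d) <= Rmax (Rabs (a - c)) (Rabs (b - d)).
Proof.
  unfold Rmax; repeat destruct Rle_dec; unfold Rabs in *; repeat destruct Rcase_abs; lra.
Qed.

Section RealValued.
Context {X : Type} (dX : X -> X -> R).
Notation cont := (cont_at dX dR).

Lemma cont_ext (f g : X -> R) x : (forall x', f x' = g x') -> cont f x -> cont g x.
Proof.
  intros E H eps He; destruct (H eps He) as [d [Hd H1]].
  exists d; split; auto; intros x' Hx'; unfold dR; rewrite <- !E; apply H1; auto.
Qed.

Lemma cont_const c x : cont (fun _ => c) x.
Proof.
  intros eps He; exists 1; split; [lra|]; intros; unfold dR.
  rewrite Rminus_diag, Rabs_R0; lra.
Qed.

Lemma cont_plus f g x : cont f x -> cont g x -> cont (fun x' => f x' + g x') x.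
Proof.
  intros Hf Hg eps He.
  destruct (Hf (eps / 2)) as [d1 [Hd1 H1]]; [lra|].
  destruct (Hg (eps / 2)) as [d2 [Hd2 H2]]; [lra|].
  exists (Rmin d1 d2); split; [apply Rmin_pos; auto|]; intros x' Hx'.
  specialize (H1 x' (Rlt_le_trans _ _ _ Hx' (Rmin_l _ _))).
  specialize (H2 x' (Rlt_le_trans _ _ _ Hx' (Rmin_r _ _))).
  unfold dR in *; replace (f x' + g x' - (f x + g x)) with ((f x' - f x) + (g x' - g x)) by ring.
  eapply Rle_lt_trans; [apply Rabs_triang|lra].
Qed.

Lemma cont_max f g x : cont f x -> cont g x -> cont (fun x' => Rmax (f x') (g x')) x.
Proof.
  intros Hf Hg eps He.
  destruct (Hf eps He) as [d1 [Hd1 H1]]; destruct (Hg eps He) as [d2 [Hd2 H2]].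
  exists (Rmin d1 d2); split; [apply Rmin_pos; auto|]; intros x' Hx'.
  specialize (H1 x' (Rlt_le_trans _ _ _ Hx' (Rmin_l _ _))).
  specialize (H2 x' (Rlt_le_trans _ _ _ Hx' (Rmin_r _ _))).
  unfold dR in *; eapply Rle_lt_trans; [apply Rabs_Rmax_sub|apply Rmax_lub_lt; auto].
Qed.

Lemma cont_comp_R (h : R -> R) f x :
  cont f x -> continuity_pt h (f x) -> cont (fun x' => h (f x')) x.
Proof.
  intros Hf Hh eps He.
  destruct (Hh eps He) as [a [Ha H]]; destruct (Hf a Ha) as [d [Hd H1]].
  exists d; split; auto; intros x' Hx'; specialize (H1 x' Hx'); unfold dR in *.
  destruct (Req_dec (f x') (f x)) as [E|E].
  - rewrite E, Rminus_diag, Rabs_R0; auto.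
  - apply (H (f x')); split; [split; [exact I|auto]|auto].
Qed.

Lemma cont_opp f x : cont f x -> cont (fun x' => - f x') x.
Proof. intro; apply (cont_comp_R Ropp); auto; apply (continuity_pt_opp id), continuity_pt_id. Qed.

Lemma cont_minus f g x : cont f x -> cont g x -> cont (fun x' => f x' - g x') x.
Proof. intros; apply cont_plus; auto; apply cont_opp; auto. Qed.

Lemma cont_abs f x : cont f x -> cont (fun x' => Rabs (f x')) x.
Proof. intro; apply (cont_comp_R Rabs); auto; apply Rcontinuity_abs. Qed.

Lemma cont_scal c f x : cont f x -> cont (fun x' => c * f x') x.
Proof.
  intro; apply (cont_comp_R (Rmult c)); auto.
  apply (continuity_pt_scal id), continuity_pt_id.
Qed.

Lemma cont_mult f g x : cont f x -> cont g x -> cont (fun x' => f x' * g x') x.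
Proof.
  intros Hf Hg.
  assert (Hsq : forall h, cont h x -> cont (fun x' => h x' ^ 2) x).
  { intros h Hh; apply (cont_comp_R (fun t => t ^ 2)); auto.
    apply derivable_continuous_pt, derivable_pt_pow. }
  apply (cont_ext (fun x' => / 4 * (f x' + g x') ^ 2 - / 4 * (f x' - g x') ^ 2)).
  { intro; field. }
  apply cont_minus; apply cont_scal, Hsq; [apply cont_plus|apply cont_minus]; auto.
Qed.

Lemma cont_div f g x : cont f x -> cont g x -> g x <> 0 -> cont (fun x' => f x' / g x') x.
Proof.
  intros Hf Hg Hn; apply cont_mult; auto.
  apply (cont_comp_R Rinv); auto; apply (continuity_pt_inv id); auto; apply continuity_pt_id.
Qed.

Lemma cont_sqrt f x : cont f x -> cont (fun x' => sqrt (f x')) x.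
Proof. intro; apply cont_comp_R; auto; apply continuity_pt_filterlim, continuous_sqrt. Qed.

Lemma cont_exp f x : cont f x -> cont (fun x' => exp (f x')) x.
Proof. intro; apply cont_comp_R; auto; apply continuity_pt_filterlim, continuous_exp. Qed.

Lemma cont_ln f x : cont f x -> 0 < f x -> cont (fun x' => ln (f x')) x.
Proof. intros; apply cont_comp_R; auto; apply continuity_pt_filterlim, continuous_ln; auto. Qed.

End RealValued.

Lemma Rabs_le_sqrt a s : a ^ 2 <= s -> Rabs a <= sqrt s.
Proof. intro; rewrite <- sqrt_Rsqr_abs; apply sqrt_le_1_alt; unfold Rsqr; lra. Qed.

Lemma sqrt_plus_sqr_le s a : 0 <= s -> sqrt (s + a ^ 2) <= sqrt s + Rabs a.
Proof.
  intro Hs; pose proof (sqrt_pos s); pose proof (Rabs_pos a).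
  rewrite <- (sqrt_pow2 (sqrt s + Rabs a)) by lra; apply sqrt_le_1_alt.
  rewrite <- (pow2_abs a); pose proof (sqrt_sqrt s Hs); nra.
Qed.

Lemma dist3_coord_le p q :
  Rabs (p3x q - p3x p) <= dist3 p q /\ Rabs (p3y q - p3y p) <= dist3 p q /\
  Rabs (p3z q - p3z p) <= dist3 p q.
Proof.
  unfold dist3; rewrite (Rabs_minus_sym (p3x q)), (Rabs_minus_sym (p3y q)),
    (Rabs_minus_sym (p3z q)).
  repeat split; apply Rabs_le_sqrt;
    pose proof (pow2_ge_0 (p3x p - p3x q)); pose proof (pow2_ge_0 (p3y p - p3y q));
    pose proof (pow2_ge_0 (p3z p - p3z q)); lra.
Qed.

Lemma dist4_coord_le p q :
  Rabs (p4a q - p4a p) <= dist4 p q /\ Rabs (p4b q - p4b p) <= dist4 p q /\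
  Rabs (p4c q - p4c p) <= dist4 p q /\ Rabs (p4d q - p4d p) <= dist4 p q.
Proof.
  unfold dist4; rewrite (Rabs_minus_sym (p4a q)), (Rabs_minus_sym (p4b q)),
    (Rabs_minus_sym (p4c q)), (Rabs_minus_sym (p4d q)).
  repeat split; apply Rabs_le_sqrt;
    pose proof (pow2_ge_0 (p4a p - p4a q)); pose proof (pow2_ge_0 (p4b p - p4b q));
    pose proof (pow2_ge_0 (p4c p - p4c q)); pose proof (pow2_ge_0 (p4d p - p4d q)); lra.
Qed.

Lemma dist3_le_sum p q :
  dist3 p q <= Rabs (p3x q - p3x p) + Rabs (p3y q - p3y p) + Rabs (p3z q - p3z p).
Proof.
  unfold dist3; rewrite (Rabs_minus_sym (p3x q)), (Rabs_minus_sym (p3y q)),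
    (Rabs_minus_sym (p3z q)), <- (sqrt_pow2 (Rabs (p3x p - p3x q))), pow2_abs
    by apply Rabs_pos.
  eapply Rle_trans; [apply sqrt_plus_sqr_le|].
  - pose proof (pow2_ge_0 (p3x p - p3x q)); pose proof (pow2_ge_0 (p3y p - p3y q)); lra.
  - apply Rplus_le_compat_r, sqrt_plus_sqr_le, pow2_ge_0.
Qed.

Lemma dist4_le_sum p q :
  dist4 p q <= Rabs (p4a q - p4a p) + Rabs (p4b q - p4b p) + Rabs (p4c q - p4c p)
               + Rabs (p4d q - p4d p).
Proof.
  unfold dist4; rewrite (Rabs_minus_sym (p4a q)), (Rabs_minus_sym (p4b q)),
    (Rabs_minus_sym (p4c q)), (Rabs_minus_sym (p4d q)),
    <- (sqrt_pow2 (Rabs (p4a p - p4a q))), pow2_abs by apply Rabs_pos.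
  pose proof (pow2_ge_0 (p4a p - p4a q)); pose proof (pow2_ge_0 (p4b p - p4b q));
    pose proof (pow2_ge_0 (p4c p - p4c q)).
  eapply Rle_trans; [apply sqrt_plus_sqr_le; lra|].
  apply Rplus_le_compat_r; eapply Rle_trans; [apply sqrt_plus_sqr_le; lra|].
  apply Rplus_le_compat_r, sqrt_plus_sqr_le, pow2_ge_0.
Qed.

Lemma cont_coord {X : Type} (dX : X -> X -> R) (c : X -> R) x :
  (forall x', Rabs (c x' - c x) <= dX x x') -> cont_at dX dR c x.
Proof. intros Hc eps He; exists eps; split; auto; intros; eapply Rle_lt_trans; eauto. Qed.

Lemma cont_p3x p : cont_at dist3 dR p3x p.
Proof. apply cont_coord; apply dist3_coord_le. Qed.
Lemma cont_p3y p : cont_at dist3 dR p3y p.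
Proof. apply cont_coord; apply dist3_coord_le. Qed.
Lemma cont_p3z p : cont_at dist3 dR p3z p.
Proof. apply cont_coord; apply dist3_coord_le. Qed.
Lemma cont_p4a q : cont_at dist4 dR p4a q.
Proof. apply cont_coord; apply dist4_coord_le. Qed.
Lemma cont_p4b q : cont_at dist4 dR p4b q.
Proof. apply cont_coord; apply dist4_coord_le. Qed.
Lemma cont_p4c q : cont_at dist4 dR p4c q.
Proof. apply cont_coord; apply dist4_coord_le. Qed.
Lemma cont_p4d q : cont_at dist4 dR p4d q.
Proof. apply cont_coord; apply dist4_coord_le. Qed.
Lemma cont_idR t : cont_at dR dR (fun s => s) t.
Proof. apply cont_coord; intro; apply Rle_refl. Qed.

Section VectorValued.
Context {X : Type} (dX : X -> X -> R).

Lemma Rmin_radius (P : R -> Prop) d1 d2 :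
  0 < d1 -> 0 < d2 -> (forall t, t < d1 -> t < d2 -> P t) ->
  exists d, 0 < d /\ forall t, t < d -> P t.
Proof.
  intros H1 H2 HP; exists (Rmin d1 d2); split; [apply Rmin_pos; auto|].
  intros t Ht; apply HP; eapply Rlt_le_trans; eauto; [apply Rmin_l|apply Rmin_r].
Qed.

Lemma cont_mkP3 fx fy fz x :
  cont_at dX dR fx x -> cont_at dX dR fy x -> cont_at dX dR fz x ->
  cont_at dX dist3 (fun x' => mkP3 (fx x') (fy x') (fz x')) x.
Proof.
  intros Hx Hy Hz eps He.
  destruct (Hx (eps / 3)) as [d1 [Hd1 H1]]; [lra|].
  destruct (Hy (eps / 3)) as [d2 [Hd2 H2]]; [lra|].
  destruct (Hz (eps / 3)) as [d3 [Hd3 H3]]; [lra|].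
  destruct (Rmin_radius (fun t => t < d1 /\ t < d2) d1 d2) as [d12 [Hd12 H12]]; auto.
  destruct (Rmin_radius (fun t => (t < d1 /\ t < d2) /\ t < d3) d12 d3)
    as [d [Hd H]]; auto.
  exists d; split; auto; intros x' Hx'; destruct (H _ Hx') as [[A1 A2] A3].
  eapply Rle_lt_trans; [apply dist3_le_sum|]; simpl.
  specialize (H1 x' A1); specialize (H2 x' A2); specialize (H3 x' A3); unfold dR in *; lra.
Qed.

Lemma cont_mkP4 fa fb fc fd x :
  cont_at dX dR fa x -> cont_at dX dR fb x -> cont_at dX dR fc x -> cont_at dX dR fd x ->
  cont_at dX dist4 (fun x' => mkP4 (fa x') (fb x') (fc x') (fd x')) x.
Proof.
  intros Ha Hb Hc Hfd eps He.
  destruct (Ha (eps / 4)) as [d1 [Hd1 H1]]; [lra|].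
  destruct (Hb (eps / 4)) as [d2 [Hd2 H2]]; [lra|].
  destruct (Hc (eps / 4)) as [d3 [Hd3 H3]]; [lra|].
  destruct (Hfd (eps / 4)) as [d4 [Hd4 H4]]; [lra|].
  destruct (Rmin_radius (fun t => t < d1 /\ t < d2) d1 d2) as [d12 [Hd12 H12]]; auto.
  destruct (Rmin_radius (fun t => t < d3 /\ t < d4) d3 d4) as [d34 [Hd34 H34]]; auto.
  destruct (Rmin_radius (fun t => (t < d1 /\ t < d2) /\ (t < d3 /\ t < d4)) d12 d34)
    as [d [Hd H]]; auto.
  exists d; split; auto; intros x' Hx'; destruct (H _ Hx') as [[A1 A2] [A3 A4]].
  eapply Rle_lt_trans; [apply dist4_le_sum|]; simpl.
  specialize (H1 x' A1); specialize (H2 x' A2); specialize (H3 x' A3); specialize (H4 x' A4).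
  unfold dR in *; lra.
Qed.

End VectorValued.

(** * Elementary geometry of R^3 *)

Definition cuboid (x1 x2 y1 y2 z1 z2 : R) (p : P3) : Prop :=
  x1 <= p3x p <= x2 /\ y1 <= p3y p <= y2 /\ z1 <= p3z p <= z2.

Ltac destruct_conj_disj :=
  repeat match goal with
  | H : _ \/ _ |- _ => destruct H
  | H : _ /\ _ |- _ => destruct H
  end.

Ltac disj_lra :=
  lazymatch goal with
  | |- _ \/ _ => first [left; disj_lra | right; disj_lra]
  | |- _ /\ _ => split; disj_lra
  | _ => lra
  end.

Lemma ball3_translate p r h k l : Rabs h + Rabs k + Rabs l < r ->
  ball3 p r (mkP3 (p3x p + h) (p3y p + k) (p3z p + l)).
Proof.
  intro; unfold ball3; eapply Rle_lt_trans; [apply dist3_le_sum|]; simpl.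
  rewrite !Rplus_minus_l; auto.
Qed.

Lemma interior3_self (S : set3) p : interior3 S p -> S p.
Proof.
  intros [r [Hr H]].
  replace p with (mkP3 (p3x p + 0) (p3y p + 0) (p3z p + 0))
    by (destruct p; simpl; f_equal; ring).
  apply H, ball3_translate; rewrite Rabs_R0; lra.
Qed.

Lemma interior3_incl (S S' : set3) p : (forall q, S q -> S' q) -> interior3 S p -> interior3 S' p.
Proof. intros Hs [r [Hr H]]; exists r; auto. Qed.

Lemma interior3_pullback (f g : P3 -> P3) (S : set3) p :
  isometry3 f -> (forall q, f (g q) = q) -> (forall q, g (f q) = q) ->
  interior3 (fun q => S (g q)) p -> interior3 S (g p).
Proof.
  intros Hf Hfg Hgf [r [Hr H]]; exists r; split; auto; intros q Hq; unfold ball3 in *.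
  rewrite <- (Hgf q); apply H; rewrite <- (Hfg p) at 1; rewrite Hf; auto.
Qed.

Lemma interior3_cuboid x1 x2 y1 y2 z1 z2 p : interior3 (cuboid x1 x2 y1 y2 z1 z2) p ->
  x1 < p3x p < x2 /\ y1 < p3y p < y2 /\ z1 < p3z p < z2.
Proof.
  intros [r [Hr H]].
  assert (Hin : forall h k l, Rabs h + Rabs k + Rabs l < r ->
    cuboid x1 x2 y1 y2 z1 z2 (mkP3 (p3x p + h) (p3y p + k) (p3z p + l)))
    by (intros; apply H, ball3_translate; auto).
  assert (Hr2 : Rabs (r / 2) = r / 2) by (apply Rabs_pos_eq; lra).
  assert (Hr2' : Rabs (- (r / 2)) = r / 2) by (rewrite Rabs_Ropp; auto).
  pose proof (Hin (r / 2) 0 0); pose proof (Hin (- (r / 2)) 0 0);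
  pose proof (Hin 0 (r / 2) 0); pose proof (Hin 0 (- (r / 2)) 0);
  pose proof (Hin 0 0 (r / 2)); pose proof (Hin 0 0 (- (r / 2))).
  rewrite ?Hr2, ?Hr2', ?Rabs_R0 in *; unfold cuboid in *; simpl in *.
  repeat split; lra.
Qed.

Lemma image3_inverse (f g : P3 -> P3) (S : set3) p :
  (forall q, g (f q) = q) -> (forall q, f (g q) = q) -> (image3 f S p <-> S (g p)).
Proof.
  intros Hgf Hfg; split.
  - intros [q [Hq ->]]; rewrite Hgf; auto.
  - intro H; exists (g p); rewrite Hfg; auto.
Qed.

Lemma isometry3_of_sqr (f : P3 -> P3) :
  (forall p q, (p3x (f p) - p3x (f q)) ^ 2 + (p3y (f p) - p3y (f q)) ^ 2
               + (p3z (f p) - p3z (f q)) ^ 2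
             = (p3x p - p3x q) ^ 2 + (p3y p - p3y q) ^ 2 + (p3z p - p3z q) ^ 2) ->
  isometry3 f.
Proof. intros H p q; unfold dist3; rewrite H; auto. Qed.

Lemma isometry3_comp f g : isometry3 f -> isometry3 g -> isometry3 (fun p => f (g p)).
Proof. intros Hf Hg p q; rewrite Hf, Hg; auto. Qed.

Lemma open3_ext (U V : set3) : (forall p, U p <-> V p) -> open3 U -> open3 V.
Proof.
  intros E HU p Hp; apply E in Hp; destruct (HU p Hp) as [r [Hr H]].
  exists r; split; auto; intros; apply E; auto.
Qed.

Lemma open3_union (U V : set3) : open3 U -> open3 V -> open3 (fun p => U p \/ V p).
Proof.
  intros HU HV p [Hp|Hp]; [destruct (HU p Hp) as [r [Hr H]]|destruct (HV p Hp) as [r [Hr H]]];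
    exists r; auto.
Qed.

Lemma open3_inter (U V : set3) : open3 U -> open3 V -> open3 (fun p => U p /\ V p).
Proof.
  intros HU HV p [Hu Hv]; destruct (HU p Hu) as [r1 [Hr1 H1]], (HV p Hv) as [r2 [Hr2 H2]].
  exists (Rmin r1 r2); split; [apply Rmin_pos; auto|]; intros q Hq; unfold ball3 in *; split;
    [apply H1|apply H2]; eapply Rlt_le_trans; eauto; [apply Rmin_l|apply Rmin_r].
Qed.

Lemma open3_halfspaces (c : P3 -> R) a :
  (forall p q, Rabs (c q - c p) <= dist3 p q) ->
  open3 (fun p => c p < a) /\ open3 (fun p => a < c p).
Proof.
  intro Hc; split; intros p Hp; [exists (a - c p)|exists (c p - a)]; split; try lra;
    intros q Hq; unfold ball3 in Hq; specialize (Hc p q); unfold Rabs in Hc;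
    destruct Rcase_abs; lra.
Qed.

Lemma closed3_cuboid x1 x2 y1 y2 z1 z2 : closed3 (cuboid x1 x2 y1 y2 z1 z2).
Proof.
  assert (Hx : forall a, open3 (fun p => p3x p < a) /\ open3 (fun p => a < p3x p))
    by (intro; apply open3_halfspaces; intros; apply dist3_coord_le).
  assert (Hy : forall a, open3 (fun p => p3y p < a) /\ open3 (fun p => a < p3y p))
    by (intro; apply open3_halfspaces; intros; apply dist3_coord_le).
  assert (Hz : forall a, open3 (fun p => p3z p < a) /\ open3 (fun p => a < p3z p))
    by (intro; apply open3_halfspaces; intros; apply dist3_coord_le).
  unfold closed3; apply (open3_ext (fun p => p3x p < x1 \/ x2 < p3x p \/ p3y p < y1 \/
    y2 < p3y p \/ p3z p < z1 \/ z2 < p3z p)).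
  - intro p; unfold cuboid; split.
    + intros H Hc; destruct_conj_disj; lra.
    + intro H; apply NNPP; intro Hn; apply H.
      repeat split; apply Rnot_lt_le; intro; apply Hn; tauto.
  - repeat (apply open3_union; [apply Hx || apply Hy || apply Hz|]); apply Hz.
Qed.

Lemma closed3_union (A B : set3) : closed3 A -> closed3 B -> closed3 (fun p => A p \/ B p).
Proof.
  intros HA HB; unfold closed3; eapply open3_ext; [|apply open3_inter; [exact HA|exact HB]].
  intro; tauto.
Qed.

Lemma cont_at_pos_near {X : Type} (dX : X -> X -> R) (f : X -> R) x :
  cont_at dX dR f x -> 0 < f x -> exists r, 0 < r /\ forall x', dX x x' < r -> 0 < f x'.
Proof.
  intros Hf Hpos; destruct (Hf (f x) Hpos) as [d [Hd H]]; exists d; split; auto.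
  intros x' Hx'; specialize (H x' Hx'); unfold dR, Rabs in H; destruct Rcase_abs; lra.
Qed.

Lemma exists_avoiding (l : list R) e : 0 < e -> exists t, 0 < t < e /\ ~ In t l.
Proof.
  revert e; induction l as [|a l IH]; intros e He.
  - exists (e / 2); split; [lra|auto].
  - destruct (IH e He) as [t [Ht Hn]]; destruct (Req_dec t a) as [->|Hta].
    + destruct (IH a ltac:(lra)) as [t' [Ht' Hn']]; exists t'; split; [lra|].
      intros [|]; [lra|auto].
    + exists t; split; auto; intros [|]; [lra|auto].
Qed.

(** * Radial rescaling between gauges *)

Lemma pair_eq0_dec u w : (u = 0 /\ w = 0) \/ (u <> 0 \/ w <> 0).
Proof. destruct (Req_dec u 0), (Req_dec w 0); tauto. Qed.

Lemma homogeneous_at0 (N : R -> R -> R) :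
  (forall k u w, 0 <= k -> N (k * u) (k * w) = k * N u w) -> N 0 0 = 0.
Proof. intro H; pose proof (H 0 0 0 (Rle_refl 0)) as E; rewrite !Rmult_0_l in E; exact E. Qed.

Definition gauge_ratio (N1 N2 : R -> R -> R) u w := N1 u w / N2 u w.
Definition rescale_u (N1 N2 : R -> R -> R) u w := u * gauge_ratio N1 N2 u w.
Definition rescale_w (N1 N2 : R -> R -> R) u w := w * gauge_ratio N1 N2 u w.

Section Rescale.
Variables N1 N2 : R -> R -> R.
Hypothesis N1_hom : forall k u w, 0 <= k -> N1 (k * u) (k * w) = k * N1 u w.
Hypothesis N2_hom : forall k u w, 0 <= k -> N2 (k * u) (k * w) = k * N2 u w.
Hypothesis N1_pos : forall u w, u <> 0 \/ w <> 0 -> 0 < N1 u w.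
Hypothesis N2_pos : forall u w, u <> 0 \/ w <> 0 -> 0 < N2 u w.

Lemma gauge_ratio_pos u w : u <> 0 \/ w <> 0 -> 0 < gauge_ratio N1 N2 u w.
Proof. intro; apply Rdiv_lt_0_compat; auto. Qed.

Lemma rescale_scal u w : exists k, 0 <= k /\
  rescale_u N1 N2 u w = k * u /\ rescale_w N1 N2 u w = k * w /\ (u <> 0 \/ w <> 0 -> 0 < k).
Proof.
  destruct (pair_eq0_dec u w) as [[-> ->]|H].
  - exists 0; unfold rescale_u, rescale_w; repeat split; try ring; try lra; intros [|]; lra.
  - exists (gauge_ratio N1 N2 u w); pose proof (gauge_ratio_pos u w H).
    unfold rescale_u, rescale_w; repeat split; try ring; lra.
Qed.

Lemma rescale_gauge u w : N2 (rescale_u N1 N2 u w) (rescale_w N1 N2 u w) = N1 u w.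
Proof.
  destruct (pair_eq0_dec u w) as [[-> ->]|H].
  - unfold rescale_u, rescale_w; rewrite !Rmult_0_l, !homogeneous_at0; auto.
  - pose proof (N2_pos u w H); pose proof (gauge_ratio_pos u w H).
    unfold rescale_u, rescale_w; rewrite (Rmult_comm u), (Rmult_comm w), N2_hom by lra.
    unfold gauge_ratio; field; lra.
Qed.

Lemma rescale_inv u w :
  rescale_u N2 N1 (rescale_u N1 N2 u w) (rescale_w N1 N2 u w) = u /\
  rescale_w N2 N1 (rescale_u N1 N2 u w) (rescale_w N1 N2 u w) = w.
Proof.
  destruct (pair_eq0_dec u w) as [[-> ->]|H].
  - unfold rescale_u, rescale_w; split; ring.
  - pose proof (N1_pos u w H); pose proof (N2_pos u w H); pose proof (gauge_ratio_pos u w H).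
    assert (E : gauge_ratio N2 N1 (rescale_u N1 N2 u w) (rescale_w N1 N2 u w)
                = / gauge_ratio N1 N2 u w).
    { unfold gauge_ratio at 1; rewrite rescale_gauge.
      unfold rescale_u, rescale_w; rewrite (Rmult_comm u), (Rmult_comm w), N1_hom by lra.
      field; split; lra. }
    unfold rescale_u at 1, rescale_w at 2; rewrite E.
    unfold rescale_u, rescale_w; split; field; lra.
Qed.

Lemma rescale_id u w : N1 u w = N2 u w ->
  rescale_u N1 N2 u w = u /\ rescale_w N1 N2 u w = w.
Proof.
  intro E; destruct (pair_eq0_dec u w) as [[-> ->]|H].
  - unfold rescale_u, rescale_w; split; ring.
  - pose proof (N2_pos u w H).
    unfold rescale_u, rescale_w, gauge_ratio; rewrite E; split; field; lra.
Qed.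

Section Continuity.
Variable C : R.
Hypothesis N1_le_N2 : forall u w, N1 u w <= C * N2 u w.
Hypothesis cont_N1 : forall (X : Type) (dX : X -> X -> R) U W x,
  cont_at dX dR U x -> cont_at dX dR W x -> cont_at dX dR (fun x' => N1 (U x') (W x')) x.
Hypothesis cont_N2 : forall (X : Type) (dX : X -> X -> R) U W x,
  cont_at dX dR U x -> cont_at dX dR W x -> cont_at dX dR (fun x' => N2 (U x') (W x')) x.
Context {X : Type} (dX : X -> X -> R).

Lemma gauge_ratio_le u w : Rabs (gauge_ratio N1 N2 u w) <= Rabs C.
Proof.
  destruct (pair_eq0_dec u w) as [[-> ->]|H].
  - unfold gauge_ratio; rewrite homogeneous_at0, Rdiv_0_l, Rabs_R0 by auto; apply Rabs_pos.
  - pose proof (N2_pos u w H); pose proof (gauge_ratio_pos u w H).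
    rewrite Rabs_right by lra; eapply Rle_trans; [|apply Rle_abs].
    unfold gauge_ratio; apply Rle_div_l; auto; rewrite Rmult_comm; auto.
Qed.

(* At the origin the gauge ratio may jump, but it stays bounded by [|C|]. *)
Lemma cont_scaled_at0 (V : X -> R) U W x :
  cont_at dX dR V x -> V x = 0 ->
  cont_at dX dR (fun x' => V x' * gauge_ratio N1 N2 (U x') (W x')) x.
Proof.
  intros HV HV0 eps He; pose proof (Rabs_pos C) as HC.
  destruct (HV (eps / (Rabs C + 1))) as [d [Hd Hclose]]; [apply Rdiv_lt_0_compat; lra|].
  exists d; split; auto; intros x' Hx'; specialize (Hclose x' Hx'); unfold dR in *.
  rewrite HV0, Rmult_0_l, Rminus_0_r, Rabs_mult; rewrite HV0, Rminus_0_r in Hclose.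
  pose proof (gauge_ratio_le (U x') (W x')); pose proof (Rabs_pos (V x')).
  apply Rlt_div_r in Hclose; [|lra]; nra.
Qed.

Lemma cont_scaled (V : X -> R) U W x :
  cont_at dX dR V x -> cont_at dX dR U x -> cont_at dX dR W x ->
  (U x = 0 /\ W x = 0 -> V x = 0) ->
  cont_at dX dR (fun x' => V x' * gauge_ratio N1 N2 (U x') (W x')) x.
Proof.
  intros HV HU HW H0; destruct (pair_eq0_dec (U x) (W x)) as [[E1 E2]|H].
  - apply cont_scaled_at0; auto.
  - apply cont_mult; auto; unfold gauge_ratio; apply cont_div; auto.
    pose proof (N2_pos _ _ H); lra.
Qed.

Lemma cont_rescale_u U W x : cont_at dX dR U x -> cont_at dX dR W x ->
  cont_at dX dR (fun x' => rescale_u N1 N2 (U x') (W x')) x.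
Proof. intros; apply cont_scaled; tauto. Qed.

Lemma cont_rescale_w U W x : cont_at dX dR U x -> cont_at dX dR W x ->
  cont_at dX dR (fun x' => rescale_w N1 N2 (U x') (W x')) x.
Proof. intros; apply cont_scaled; tauto. Qed.

End Continuity.
End Rescale.

Definition box_gauge (a b u w : R) : R := Rmax (Rabs u / a) (Rabs w / b).

Lemma box_gauge_ge a b u w :
  Rabs u / a <= box_gauge a b u w /\ Rabs w / b <= box_gauge a b u w.
Proof. split; [apply Rmax_l|apply Rmax_r]. Qed.

Lemma box_gauge_nonneg a b u w : 0 < a -> 0 <= box_gauge a b u w.
Proof.
  intro; apply Rle_trans with (Rabs u / a); [|apply box_gauge_ge].
  apply Rdiv_le_0_compat; [apply Rabs_pos|auto].
Qed.

Lemma box_gauge_pos a b u w : 0 < a -> 0 < b -> u <> 0 \/ w <> 0 -> 0 < box_gauge a b u w.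
Proof.
  destruct (box_gauge_ge a b u w); intros Ha Hb [Hnz|Hnz];
    [apply Rlt_le_trans with (Rabs u / a)|apply Rlt_le_trans with (Rabs w / b)];
    auto; apply Rdiv_lt_0_compat; auto; apply Rabs_pos_lt; auto.
Qed.

Lemma box_gauge_hom a b k u w : 0 <= k -> box_gauge a b (k * u) (k * w) = k * box_gauge a b u w.
Proof.
  intro Hk; unfold box_gauge, Rdiv; rewrite !Rabs_mult, (Rabs_right k), !Rmult_assoc by lra.
  apply RmaxRmult; auto.
Qed.

Lemma box_gauge_le1 a b u w : 0 < a -> 0 < b ->
  (box_gauge a b u w <= 1 <-> Rabs u <= a /\ Rabs w <= b).
Proof.
  intros Ha Hb; rewrite (Rdiv_le_1 (Rabs u)), (Rdiv_le_1 (Rabs w)) by auto.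
  unfold box_gauge; split.
  - intro; split; eapply Rle_trans; eauto; [apply Rmax_l|apply Rmax_r].
  - intros []; apply Rmax_lub; auto.
Qed.

Lemma box_gauge_le_box_gauge a b b' u w : 0 < a -> 0 < b -> 0 < b' ->
  box_gauge a b u w <= (1 + b' / b) * box_gauge a b' u w.
Proof.
  intros Ha Hb Hb'; pose proof (box_gauge_ge a b u w) as [Hu _].
  pose proof (box_gauge_ge a b' u w) as [Hu' Hw'].
  pose proof (box_gauge_nonneg a b' u w Ha).
  assert (0 < b' / b) by (apply Rdiv_lt_0_compat; auto).
  apply Rmax_lub; [nra|].
  replace (Rabs w / b) with (b' / b * (Rabs w / b')) by (field; lra); nra.
Qed.

Lemma cont_box_gauge {X : Type} (dX : X -> X -> R) a b U W x :
  cont_at dX dR U x -> cont_at dX dR W x -> cont_at dX dR (fun x' => box_gauge a b (U x') (W x')) x.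
Proof.
  intros; unfold box_gauge, Rdiv.
  apply cont_max; apply cont_mult; try apply cont_const; apply cont_abs; auto.
Qed.

Definition squash_u (a b1 b2 : R) := rescale_u (box_gauge a b1) (box_gauge a b2).
Definition squash_w (a b1 b2 : R) := rescale_w (box_gauge a b1) (box_gauge a b2).

Section Squash.
Variables a b1 b2 : R.
Hypothesis a_pos : 0 < a.
Hypothesis b1_pos : 0 < b1.
Hypothesis b2_pos : 0 < b2.

Local Ltac gauge_facts :=
  intros; first [apply box_gauge_hom | apply box_gauge_pos]; auto.

Lemma squash_inv u w :
  squash_u a b2 b1 (squash_u a b1 b2 u w) (squash_w a b1 b2 u w) = u /\
  squash_w a b2 b1 (squash_u a b1 b2 u w) (squash_w a b1 b2 u w) = w.
Proof. apply rescale_inv; gauge_facts. Qed.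

Lemma squash_gauge u w :
  box_gauge a b2 (squash_u a b1 b2 u w) (squash_w a b1 b2 u w) = box_gauge a b1 u w.
Proof. apply rescale_gauge; gauge_facts. Qed.

Lemma squash_scal u w : exists k, 0 <= k /\
  squash_u a b1 b2 u w = k * u /\ squash_w a b1 b2 u w = k * w /\ (u <> 0 \/ w <> 0 -> 0 < k).
Proof. apply rescale_scal; gauge_facts. Qed.

Lemma squash_fixed u w : Rabs w / b1 <= Rabs u / a -> Rabs w / b2 <= Rabs u / a ->
  squash_u a b1 b2 u w = u /\ squash_w a b1 b2 u w = w.
Proof.
  intros; apply rescale_id; [gauge_facts|]; unfold box_gauge; rewrite !Rmax_left; auto.
Qed.

Lemma cont_squash_u {X : Type} (dX : X -> X -> R) U W x :
  cont_at dX dR U x -> cont_at dX dR W x ->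
  cont_at dX dR (fun x' => squash_u a b1 b2 (U x') (W x')) x.
Proof.
  eapply (cont_rescale_u (box_gauge a b1) (box_gauge a b2)); intros;
    first [ apply box_gauge_hom | apply box_gauge_pos | apply box_gauge_le_box_gauge
          | apply cont_box_gauge ]; eauto.
Qed.

Lemma cont_squash_w {X : Type} (dX : X -> X -> R) U W x :
  cont_at dX dR U x -> cont_at dX dR W x ->
  cont_at dX dR (fun x' => squash_w a b1 b2 (U x') (W x')) x.
Proof.
  eapply (cont_rescale_w (box_gauge a b1) (box_gauge a b2)); intros;
    first [ apply box_gauge_hom | apply box_gauge_pos | apply box_gauge_le_box_gauge
          | apply cont_box_gauge ]; eauto.
Qed.

Hypothesis b2_le_b1 : b2 <= b1.

Lemma squash_box u w : (Rabs u <= a /\ 0 <= w <= b1) <->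
  (Rabs (squash_u a b1 b2 u w) <= a /\ 0 <= squash_w a b1 b2 u w <= b2).
Proof.
  pose proof (squash_gauge u w) as E.
  destruct (squash_scal u w) as [k [Hk [Eu [Ew Hpos]]]].
  split; intros [Hu [Hw0 Hw1]].
  - assert (Hg : box_gauge a b1 u w <= 1)
      by (apply box_gauge_le1; auto; split; auto; rewrite Rabs_right; lra).
    rewrite <- E in Hg; apply box_gauge_le1 in Hg as [Hu' Hw']; auto.
    split; auto; split; [rewrite Ew; apply Rmult_le_pos; auto|].
    eapply Rle_trans; [apply Rle_abs|auto].
  - assert (Hg : box_gauge a b2 (squash_u a b1 b2 u w) (squash_w a b1 b2 u w) <= 1)
      by (apply box_gauge_le1; auto; split; auto; rewrite Rabs_right; lra).
    rewrite E in Hg; apply box_gauge_le1 in Hg as [Hu' Hw']; auto.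
    assert (0 <= w).
    { destruct (Rle_dec 0 w) as [|Hneg]; auto.
      assert (0 < k) by (apply Hpos; right; lra); rewrite Ew in Hw0; nra. }
    repeat split; auto; eapply Rle_trans; [apply Rle_abs|auto].
Qed.

Lemma squash_fixed_cone u w : Rabs w / b2 <= Rabs u / a ->
  squash_u a b1 b2 u w = u /\ squash_w a b1 b2 u w = w.
Proof.
  intro H; apply squash_fixed; auto; eapply Rle_trans; [|exact H].
  apply Rmult_le_compat_l; [apply Rabs_pos|apply Rinv_le_contravar; auto].
Qed.

Lemma squash_fixed_cone_image u w :
  Rabs (squash_w a b1 b2 u w) / b2 <= Rabs (squash_u a b1 b2 u w) / a ->
  squash_u a b1 b2 u w = u /\ squash_w a b1 b2 u w = w.
Proof.
  intro H; destruct (squash_scal u w) as [k [Hk [Eu [Ew Hpos]]]].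
  destruct (pair_eq0_dec u w) as [[-> ->]|Hn].
  - rewrite Eu, Ew; split; ring.
  - apply squash_fixed_cone; specialize (Hpos Hn).
    rewrite Eu, Ew, !Rabs_mult, (Rabs_right k) in H by lra; unfold Rdiv in *; nra.
Qed.

(* The squash maps the box [|u| <= a, 0 <= w <= b1] onto the lower box [|u| <= a,
   0 <= w <= b2] and fixes the cone [|w|/b2 <= |u|/a] pointwise, so it carries the box glued
   to a part of the cone onto the lower box glued to the same part. *)
Lemma squash_union (Q : Prop) (P : R -> R -> Prop) u w :
  (forall u w, P u w -> Rabs w / b2 <= Rabs u / a) ->
  (Q /\ - a <= u <= a /\ 0 <= w <= b1) \/ P u w <->
  (Q /\ - a <= squash_u a b1 b2 u w <= a /\ 0 <= squash_w a b1 b2 u w <= b2) \/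
  P (squash_u a b1 b2 u w) (squash_w a b1 b2 u w).
Proof.
  intro Hcone; rewrite <- !Rabs_le_between.
  rewrite squash_box; split; intros [H|H]; auto; right.
  - destruct (squash_fixed_cone u w (Hcone _ _ H)) as [-> ->]; auto.
  - destruct (squash_fixed_cone_image u w (Hcone _ _ H)) as [Eu Ew].
    rewrite Eu, Ew in H; auto.
Qed.

End Squash.

(** * Flattening the tile onto a frame *)

Definition squash_xz (c a b1 b2 : R) (p : P3) : P3 :=
  mkP3 (c + squash_u a b1 b2 (p3x p - c) (p3z p)) (p3y p)
       (squash_w a b1 b2 (p3x p - c) (p3z p)).
Definition squash_xy (c a b1 b2 : R) (p : P3) : P3 :=
  mkP3 (c + squash_u a b1 b2 (p3x p - c) (p3y p)) (squash_w a b1 b2 (p3x p - c) (p3y p))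
       (p3z p).

Section Squash3.
Variables c a b1 b2 : R.
Hypothesis a_pos : 0 < a.
Hypothesis b1_pos : 0 < b1.
Hypothesis b2_pos : 0 < b2.

Lemma squash_xz_inv p : squash_xz c a b2 b1 (squash_xz c a b1 b2 p) = p.
Proof.
  destruct (squash_inv a b1 b2 a_pos b1_pos b2_pos (p3x p - c) (p3z p)) as [Eu Ew].
  unfold squash_xz; simpl; rewrite Rplus_minus_l, Eu, Ew.
  destruct p; simpl; f_equal; ring.
Qed.

Lemma squash_xy_inv p : squash_xy c a b2 b1 (squash_xy c a b1 b2 p) = p.
Proof.
  destruct (squash_inv a b1 b2 a_pos b1_pos b2_pos (p3x p - c) (p3y p)) as [Eu Ew].
  unfold squash_xy; simpl; rewrite Rplus_minus_l, Eu, Ew.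
  destruct p; simpl; f_equal; ring.
Qed.

Local Ltac cont_squash3 :=
  apply cont_mkP3;
  repeat first [ apply cont_plus; [apply cont_const|]
               | apply cont_squash_u | apply cont_squash_w
               | apply cont_minus; [apply cont_p3x|apply cont_const]
               | apply cont_p3y | apply cont_p3z ]; auto.

Lemma cont_squash_xz p : cont_at dist3 dist3 (squash_xz c a b1 b2) p.
Proof. unfold squash_xz; cont_squash3. Qed.

Lemma cont_squash_xy p : cont_at dist3 dist3 (squash_xy c a b1 b2) p.
Proof. unfold squash_xy; cont_squash3. Qed.

Hypothesis b2_le_b1 : b2 <= b1.

Lemma squash_xz_union (S T : set3) (Q : R -> Prop) (P : R -> R -> R -> Prop) :
  (forall y u w, P y u w -> Rabs w / b2 <= Rabs u / a) ->
  (forall p, S p <-> (Q (p3y p) /\ - a <= p3x p - c <= a /\ 0 <= p3z p <= b1) \/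
                     P (p3y p) (p3x p - c) (p3z p)) ->
  (forall p, T p <-> (Q (p3y p) /\ - a <= p3x p - c <= a /\ 0 <= p3z p <= b2) \/
                     P (p3y p) (p3x p - c) (p3z p)) ->
  forall p, S p <-> T (squash_xz c a b1 b2 p).
Proof.
  intros Hcone HS HT p; rewrite HS, HT; unfold squash_xz; simpl; rewrite Rplus_minus_l.
  apply squash_union; eauto.
Qed.

Lemma squash_xy_union (S T : set3) (Q : R -> Prop) (P : R -> R -> R -> Prop) :
  (forall z u w, P z u w -> Rabs w / b2 <= Rabs u / a) ->
  (forall p, S p <-> (Q (p3z p) /\ - a <= p3x p - c <= a /\ 0 <= p3y p <= b1) \/
                     P (p3z p) (p3x p - c) (p3y p)) ->
  (forall p, T p <-> (Q (p3z p) /\ - a <= p3x p - c <= a /\ 0 <= p3y p <= b2) \/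
                     P (p3z p) (p3x p - c) (p3y p)) ->
  forall p, S p <-> T (squash_xy c a b1 b2 p).
Proof.
  intros Hcone HS HT p; rewrite HS, HT; unfold squash_xy; simpl; rewrite Rplus_minus_l.
  apply squash_union; eauto.
Qed.

End Squash3.

Definition tile (p : P3) : Prop :=
  cuboid 0 2 0 4 0 1 p \/ cuboid 2 6 0 1 0 2 p \/ cuboid 2 6 2 3 0 2 p \/ cuboid 6 8 0 4 0 1 p.

Definition tile_low (p : P3) : Prop :=
  cuboid 0 2 0 4 0 1 p \/ cuboid 2 6 0 1 0 1 p \/ cuboid 2 6 2 3 0 1 p \/ cuboid 6 8 0 4 0 1 p.

Definition tile_low_left (p : P3) : Prop :=
  cuboid 0 2 0 3 0 1 p \/ cuboid 2 6 0 1 0 1 p \/ cuboid 2 6 2 3 0 1 p \/ cuboid 6 8 0 4 0 1 p.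

Definition frame (p : P3) : Prop :=
  cuboid 0 2 0 3 0 1 p \/ cuboid 2 6 0 1 0 1 p \/ cuboid 2 6 2 3 0 1 p \/ cuboid 6 8 0 3 0 1 p.

Ltac solve_shape :=
  intros [x y z]; unfold tile, tile_low, tile_low_left, frame, cuboid; simpl;
  split; intro; destruct_conj_disj; disj_lra.

Ltac solve_cone :=
  intros ? ? ? H; destruct_conj_disj; unfold Rabs; repeat destruct Rcase_abs; lra.

Lemma tile_lower p : tile p <-> tile_low (squash_xz 4 2 2 1 p).
Proof.
  apply (squash_xz_union 4 2 2 1 ltac:(lra) ltac:(lra) ltac:(lra) ltac:(lra) tile tile_low
    (fun y => 0 <= y <= 1 \/ 2 <= y <= 3)
    (fun y u w => (-4 <= u <= -2 \/ 2 <= u <= 4) /\ 0 <= y <= 4 /\ 0 <= w <= 1));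
    [solve_cone|solve_shape|solve_shape].
Qed.

Lemma tile_low_shorten_left p : tile_low p <-> tile_low_left (squash_xy 1 1 4 3 p).
Proof.
  apply (squash_xy_union 1 1 4 3 ltac:(lra) ltac:(lra) ltac:(lra) ltac:(lra) tile_low
    tile_low_left (fun z => 0 <= z <= 1)
    (fun z u w => 0 <= z <= 1 /\
       ((1 <= u <= 5 /\ (0 <= w <= 1 \/ 2 <= w <= 3)) \/ (5 <= u <= 7 /\ 0 <= w <= 4))));
    [solve_cone|solve_shape|solve_shape].
Qed.

Lemma tile_low_left_shorten_right p : tile_low_left p <-> frame (squash_xy 7 1 4 3 p).
Proof.
  apply (squash_xy_union 7 1 4 3 ltac:(lra) ltac:(lra) ltac:(lra) ltac:(lra) tile_low_left
    frame (fun z => 0 <= z <= 1)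
    (fun z u w => 0 <= z <= 1 /\
       ((-7 <= u <= -5 /\ 0 <= w <= 3) \/ (-5 <= u <= -1 /\ (0 <= w <= 1 \/ 2 <= w <= 3)))));
    [solve_cone|solve_shape|solve_shape].
Qed.

(** * The frame as a solid torus *)

Definition norm2 (u w : R) : R := sqrt (u ^ 2 + w ^ 2).

Lemma norm2_sqr u w : norm2 u w ^ 2 = u ^ 2 + w ^ 2.
Proof. apply pow2_sqrt; pose proof (pow2_ge_0 u); pose proof (pow2_ge_0 w); lra. Qed.

Lemma norm2_hom k u w : 0 <= k -> norm2 (k * u) (k * w) = k * norm2 u w.
Proof.
  intro Hk; unfold norm2; replace ((k * u) ^ 2 + (k * w) ^ 2) with (k ^ 2 * (u ^ 2 + w ^ 2))
    by ring.
  rewrite sqrt_mult_alt, sqrt_pow2 by (auto; apply pow2_ge_0); reflexivity.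
Qed.

Lemma norm2_pos u w : u <> 0 \/ w <> 0 -> 0 < norm2 u w.
Proof.
  intro H; apply sqrt_lt_R0; pose proof (pow2_ge_0 u); pose proof (pow2_ge_0 w).
  destruct H as [H|H]; apply (pow_nonzero _ 2) in H; lra.
Qed.

Lemma norm2_unit c d : c ^ 2 + d ^ 2 = 1 -> norm2 c d = 1.
Proof. intro H; unfold norm2; rewrite H; apply sqrt_1. Qed.

Lemma unit_nonzero c d : c ^ 2 + d ^ 2 = 1 -> c <> 0 \/ d <> 0.
Proof. intro H; destruct (Req_dec c 0) as [->|]; auto; right; intros ->; lra. Qed.

Lemma box_gauge_le_norm2 u w : box_gauge 1 1 u w <= 1 * norm2 u w.
Proof. unfold box_gauge; rewrite !Rdiv_1_r, Rmult_1_l; apply sqrt_plus_sqr. Qed.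

Lemma norm2_le_box_gauge u w : norm2 u w <= sqrt 2 * box_gauge 1 1 u w.
Proof. unfold box_gauge; rewrite !Rdiv_1_r; apply sqrt_plus_sqr. Qed.

Lemma cont_norm2 {X : Type} (dX : X -> X -> R) U W x :
  cont_at dX dR U x -> cont_at dX dR W x -> cont_at dX dR (fun x' => norm2 (U x') (W x')) x.
Proof.
  intros; unfold norm2; apply cont_sqrt; simpl.
  apply cont_plus; repeat apply cont_mult; auto; apply cont_const.
Qed.

(* The square [-1,1]^2 is carried radially onto the unit disc. *)
Definition disc_u := rescale_u (box_gauge 1 1) norm2.
Definition disc_w := rescale_w (box_gauge 1 1) norm2.
Definition square_u := rescale_u norm2 (box_gauge 1 1).
Definition square_w := rescale_w norm2 (box_gauge 1 1).

Local Ltac disc_facts :=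
  intros; first [ apply box_gauge_hom | apply norm2_hom | apply box_gauge_pos
                | apply norm2_pos | apply box_gauge_le_norm2 | apply norm2_le_box_gauge
                | apply cont_box_gauge | apply cont_norm2 ]; auto; lra.

Lemma square_disc u w : square_u (disc_u u w) (disc_w u w) = u /\
                        square_w (disc_u u w) (disc_w u w) = w.
Proof. apply rescale_inv; disc_facts. Qed.

Lemma disc_square u w : disc_u (square_u u w) (square_w u w) = u /\
                        disc_w (square_u u w) (square_w u w) = w.
Proof. apply rescale_inv; disc_facts. Qed.

Lemma disc_norm u w : disc_u u w ^ 2 + disc_w u w ^ 2 = box_gauge 1 1 u w ^ 2.
Proof. rewrite <- norm2_sqr; f_equal; apply rescale_gauge; disc_facts. Qed.

Section DiscContinuity.
Context {X : Type} (dX : X -> X -> R) (U W : X -> R) (x : X).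
Hypothesis cont_U : cont_at dX dR U x.
Hypothesis cont_W : cont_at dX dR W x.

Lemma cont_disc_u : cont_at dX dR (fun x' => disc_u (U x') (W x')) x.
Proof. eapply cont_rescale_u; auto; disc_facts. Qed.
Lemma cont_disc_w : cont_at dX dR (fun x' => disc_w (U x') (W x')) x.
Proof. eapply cont_rescale_w; auto; disc_facts. Qed.
Lemma cont_square_u : cont_at dX dR (fun x' => square_u (U x') (W x')) x.
Proof. eapply cont_rescale_u; auto; disc_facts. Qed.
Lemma cont_square_w : cont_at dX dR (fun x' => square_w (U x') (W x')) x.
Proof. eapply cont_rescale_w; auto; disc_facts. Qed.

End DiscContinuity.

Definition inner_gauge := box_gauge 2 (1 / 2).
Definition outer_gauge := box_gauge 4 (3 / 2).

Lemma inner_gauge_pos u w : u <> 0 \/ w <> 0 -> 0 < inner_gauge u w.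
Proof. apply box_gauge_pos; lra. Qed.

Lemma outer_gauge_pos u w : u <> 0 \/ w <> 0 -> 0 < outer_gauge u w.
Proof. apply box_gauge_pos; lra. Qed.

Lemma outer_gauge_lt_inner u w : u <> 0 \/ w <> 0 -> outer_gauge u w < inner_gauge u w.
Proof.
  intro H; pose proof (inner_gauge_pos u w H); pose proof (Rabs_pos w).
  destruct (box_gauge_ge 2 (1 / 2) u w).
  enough (outer_gauge u w <= inner_gauge u w / 2) by lra.
  apply Rmax_lub; unfold inner_gauge in *; lra.
Qed.

Lemma ln_gauge_gap_pos u w : u <> 0 \/ w <> 0 ->
  0 < ln (inner_gauge u w) - ln (outer_gauge u w).
Proof.
  intro H; pose proof (outer_gauge_pos u w H); pose proof (outer_gauge_lt_inner u w H).
  pose proof (ln_increasing _ _ H0 H1); lra.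
Qed.

(* Logarithmic interpolation between the two boundary rectangles of the frame:
   the level is 0 on the inner boundary and 1 on the outer one. *)
Definition frame_level (u w : R) : R :=
  ln (inner_gauge u w) / (ln (inner_gauge u w) - ln (outer_gauge u w)).

(* The distance from the centre, along the unit direction (c, d), of the point at level s. *)
Definition frame_radius (s c d : R) : R :=
  exp (- (1 - s) * ln (inner_gauge c d) - s * ln (outer_gauge c d)).

Lemma ln_gauge_scal (N : R -> R -> R) k u w : 0 < k -> 0 < N u w ->
  (forall k u w, 0 <= k -> N (k * u) (k * w) = k * N u w) ->
  ln (N (k * u) (k * w)) = ln k + ln (N u w).
Proof. intros Hk HN Hhom; rewrite Hhom by lra; apply ln_mult; auto. Qed.

Lemma frame_radius_level u w : u <> 0 \/ w <> 0 ->
  frame_radius (frame_level u w) (u / norm2 u w) (w / norm2 u w) = norm2 u w.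
Proof.
  intro H; pose proof (norm2_pos u w H) as Hn.
  pose proof (inner_gauge_pos u w H); pose proof (outer_gauge_pos u w H).
  pose proof (ln_gauge_gap_pos u w H).
  unfold frame_radius, Rdiv; rewrite (Rmult_comm u), (Rmult_comm w).
  rewrite !(ln_gauge_scal _ (/ norm2 u w)), ln_Rinv by
    (auto using Rinv_0_lt_compat; intros; apply box_gauge_hom; auto).
  transitivity (exp (ln (norm2 u w))); [|apply exp_ln; auto].
  f_equal; unfold frame_level; field; lra.
Qed.

Lemma frame_level_radius s c d : c ^ 2 + d ^ 2 = 1 ->
  frame_level (frame_radius s c d * c) (frame_radius s c d * d) = s.
Proof.
  intro H; pose proof (unit_nonzero c d H) as Hnz.
  pose proof (inner_gauge_pos c d Hnz); pose proof (outer_gauge_pos c d Hnz).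
  pose proof (ln_gauge_gap_pos c d Hnz).
  unfold frame_level; rewrite !(ln_gauge_scal _ (frame_radius s c d)) by
    (unfold frame_radius; auto using exp_pos; intros; apply box_gauge_hom; auto).
  unfold frame_radius; rewrite ln_exp; field; lra.
Qed.

Lemma box_gauge_ge1 a b u w : 0 < a -> 0 < b ->
  (1 <= box_gauge a b u w <-> ~ (Rabs u < a /\ Rabs w < b)).
Proof.
  intros Ha Hb; unfold box_gauge; rewrite (Rdiv_lt_1 (Rabs u)), (Rdiv_lt_1 (Rabs w))
    by auto.
  unfold Rmax; destruct Rle_dec; split; intros; try lra;
    apply Rnot_lt_le; intro; tauto.
Qed.

Lemma frame_iff p : frame p <->
  outer_gauge (p3x p - 4) (p3y p - 3 / 2) <= 1 /\
  1 <= inner_gauge (p3x p - 4) (p3y p - 3 / 2) /\ 0 <= p3z p <= 1.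
Proof.
  unfold outer_gauge, inner_gauge; rewrite box_gauge_le1, box_gauge_ge1 by lra.
  rewrite !Rabs_le_between, !Rabs_lt_between.
  unfold frame, cuboid; destruct p as [x y z]; simpl; split.
  - intro; destruct_conj_disj; (split; [|split]; [lra|intros [[] []]; lra|lra]).
  - intros [[[] []] [Hhole []]].
    destruct (Rle_dec x 2); [left; lra|].
    destruct (Rle_dec 6 x); [right; right; right; lra|].
    destruct (Rle_dec y 1); [right; left; lra|].
    destruct (Rle_dec 2 y); [right; right; left; lra|].
    exfalso; apply Hhole; lra.
Qed.

Definition off_center (p : P3) : Prop := p3x p - 4 <> 0 \/ p3y p - 3 / 2 <> 0.
Definition on_circle (q : P4) : Prop := p4c q ^ 2 + p4d q ^ 2 = 1.

(* Level and height are rescaled to the square [-1,1]^2 and sent onto the disc; the last two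
   coordinates give the direction around the axis x = 4, y = 3/2. *)
Definition frame_to_torus (p : P3) : P4 :=
  mkP4 (disc_u (2 * frame_level (p3x p - 4) (p3y p - 3 / 2) - 1) (2 * p3z p - 1))
       (disc_w (2 * frame_level (p3x p - 4) (p3y p - 3 / 2) - 1) (2 * p3z p - 1))
       ((p3x p - 4) / norm2 (p3x p - 4) (p3y p - 3 / 2))
       ((p3y p - 3 / 2) / norm2 (p3x p - 4) (p3y p - 3 / 2)).

Definition torus_to_frame (q : P4) : P3 :=
  mkP3 (4 + frame_radius ((square_u (p4a q) (p4b q) + 1) / 2) (p4c q) (p4d q) * p4c q)
       (3 / 2 + frame_radius ((square_u (p4a q) (p4b q) + 1) / 2) (p4c q) (p4d q) * p4d q)
       ((square_w (p4a q) (p4b q) + 1) / 2).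

Lemma torus_frame_torus p : off_center p -> torus_to_frame (frame_to_torus p) = p.
Proof.
  intro H; unfold torus_to_frame, frame_to_torus; simpl.
  destruct (square_disc (2 * frame_level (p3x p - 4) (p3y p - 3 / 2) - 1) (2 * p3z p - 1))
    as [-> ->].
  replace ((2 * frame_level (p3x p - 4) (p3y p - 3 / 2) - 1 + 1) / 2)
    with (frame_level (p3x p - 4) (p3y p - 3 / 2)) by field.
  rewrite frame_radius_level by auto; pose proof (norm2_pos _ _ H).
  destruct p as [x y z]; simpl in *; f_equal; field; lra.
Qed.

Lemma frame_torus_frame q : on_circle q -> frame_to_torus (torus_to_frame q) = q.
Proof.
  intro H; unfold frame_to_torus, torus_to_frame; simpl.
  set (r := frame_radius _ (p4c q) (p4d q)).
  assert (Hr : 0 < r) by apply exp_pos.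
  replace (4 + r * p4c q - 4) with (r * p4c q) by ring.
  replace (3 / 2 + r * p4d q - 3 / 2) with (r * p4d q) by ring.
  rewrite norm2_hom, norm2_unit by (auto; lra); unfold r; rewrite frame_level_radius by auto.
  fold r; replace (2 * ((square_u (p4a q) (p4b q) + 1) / 2) - 1) with (square_u (p4a q) (p4b q))
    by field.
  replace (2 * ((square_w (p4a q) (p4b q) + 1) / 2) - 1) with (square_w (p4a q) (p4b q))
    by field.
  destruct (disc_square (p4a q) (p4b q)) as [-> ->].
  destruct q as [a b c d]; simpl; f_equal; field; lra.
Qed.

Lemma torus_to_frame_off_center q : on_circle q -> off_center (torus_to_frame q).
Proof.
  intro H; unfold off_center, torus_to_frame; simpl.
  set (r := frame_radius _ (p4c q) (p4d q)); assert (0 < r) by apply exp_pos.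
  replace (4 + r * p4c q - 4) with (r * p4c q) by ring.
  replace (3 / 2 + r * p4d q - 3 / 2) with (r * p4d q) by ring.
  destruct (unit_nonzero _ _ H); [left|right]; apply Rmult_integral_contrapositive; split; lra.
Qed.

Lemma frame_to_torus_on_circle p : off_center p -> on_circle (frame_to_torus p).
Proof.
  intro H; unfold on_circle, frame_to_torus; simpl; pose proof (norm2_pos _ _ H).
  transitivity (((p3x p - 4) ^ 2 + (p3y p - 3 / 2) ^ 2) / norm2 (p3x p - 4) (p3y p - 3 / 2) ^ 2).
  - field; lra.
  - rewrite <- norm2_sqr; field; lra.
Qed.

Lemma ln_nonneg_iff x : 0 < x -> (0 <= ln x <-> 1 <= x).
Proof.
  intro Hx; rewrite <- ln_1; split; intro H.
  - apply Rnot_lt_le; intro; pose proof (ln_increasing _ _ Hx H0); lra.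
  - apply ln_le; auto; lra.
Qed.

Lemma ln_nonpos_iff x : 0 < x -> (ln x <= 0 <-> x <= 1).
Proof.
  intro Hx; rewrite <- ln_1; split; intro H.
  - apply Rnot_lt_le; intro; pose proof (ln_increasing _ _ Rlt_0_1 H0); lra.
  - apply ln_le; auto.
Qed.

Lemma frame_level_bounds u w : u <> 0 \/ w <> 0 ->
  (0 <= frame_level u w <-> 1 <= inner_gauge u w) /\
  (frame_level u w <= 1 <-> outer_gauge u w <= 1).
Proof.
  intro H; pose proof (ln_gauge_gap_pos u w H) as Hgap.
  rewrite <- (ln_nonneg_iff (inner_gauge u w)), <- (ln_nonpos_iff (outer_gauge u w))
    by auto using inner_gauge_pos, outer_gauge_pos.
  unfold frame_level; rewrite <- Rle_div_r, Rle_div_l by lra; split; split; intro; lra.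
Qed.

Lemma sqr_le1 g : 0 <= g -> (g ^ 2 <= 1 <-> g <= 1).
Proof. intro; split; intro; nra. Qed.

Lemma solid_torus_frame_to_torus p : off_center p ->
  (solid_torus (frame_to_torus p) <-> frame p).
Proof.
  intro H; pose proof (frame_to_torus_on_circle p H) as Hc.
  unfold solid_torus; fold (on_circle (frame_to_torus p)); rewrite frame_iff.
  unfold frame_to_torus at 1 2; cbn [p4a p4b].
  rewrite disc_norm, sqr_le1, box_gauge_le1 by (try apply box_gauge_nonneg; lra).
  destruct (frame_level_bounds _ _ H) as [<- <-].
  rewrite !Rabs_le_between; split; [intros [[] _]|intros [? []]]; repeat split; auto; lra.
Qed.

Section TorusContinuity.
Context {X : Type} (dX : X -> X -> R) (U W : X -> R) (x : X).
Hypothesis cont_U : cont_at dX dR U x.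
Hypothesis cont_W : cont_at dX dR W x.
Hypothesis nonzero : U x <> 0 \/ W x <> 0.

Lemma cont_frame_level : cont_at dX dR (fun x' => frame_level (U x') (W x')) x.
Proof.
  pose proof (inner_gauge_pos _ _ nonzero); pose proof (outer_gauge_pos _ _ nonzero).
  pose proof (ln_gauge_gap_pos _ _ nonzero).
  unfold frame_level, inner_gauge, outer_gauge in *.
  apply cont_div; [|apply cont_minus|lra]; apply cont_ln; auto; apply cont_box_gauge; auto.
Qed.

Lemma cont_frame_radius S : cont_at dX dR S x ->
  cont_at dX dR (fun x' => frame_radius (S x') (U x') (W x')) x.
Proof.
  intro HS; pose proof (inner_gauge_pos _ _ nonzero); pose proof (outer_gauge_pos _ _ nonzero).
  unfold frame_radius, inner_gauge, outer_gauge in *.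
  apply cont_exp, cont_minus; apply cont_mult;
    try (apply cont_ln; auto; apply cont_box_gauge; auto).
  - apply cont_opp, cont_minus; auto; apply cont_const.
  - auto.
Qed.

End TorusContinuity.

Lemma cont_frame_to_torus p : off_center p -> cont_at dist3 dist4 frame_to_torus p.
Proof.
  intro H; pose proof (norm2_pos _ _ H).
  assert (HU : cont_at dist3 dR (fun q => p3x q - 4) p)
    by (apply cont_minus; [apply cont_p3x|apply cont_const]).
  assert (HW : cont_at dist3 dR (fun q => p3y q - 3 / 2) p)
    by (apply cont_minus; [apply cont_p3y|apply cont_const]).
  assert (HS : cont_at dist3 dR (fun q => 2 * frame_level (p3x q - 4) (p3y q - 3 / 2) - 1) p)
    by (apply cont_minus; [apply cont_scal, cont_frame_level|apply cont_const]; auto).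
  assert (HT : cont_at dist3 dR (fun q => 2 * p3z q - 1) p)
    by (apply cont_minus; [apply cont_scal, cont_p3z|apply cont_const]).
  unfold frame_to_torus; apply cont_mkP4;
    [apply cont_disc_u|apply cont_disc_w|apply cont_div|apply cont_div]; auto;
    try apply cont_norm2; auto; lra.
Qed.

Lemma cont_torus_to_frame q : on_circle q -> cont_at dist4 dist3 torus_to_frame q.
Proof.
  intro H; pose proof (unit_nonzero _ _ H) as Hnz.
  assert (HS : cont_at dist4 dR (fun q => (square_u (p4a q) (p4b q) + 1) / 2) q)
    by (apply cont_div; [apply cont_plus; [apply cont_square_u; [apply cont_p4a|apply cont_p4b]
       |apply cont_const]|apply cont_const|lra]).
  unfold torus_to_frame; apply cont_mkP3.
  - apply cont_plus; [apply cont_const|apply cont_mult; [|apply cont_p4c]].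
    apply cont_frame_radius; auto; [apply cont_p4c|apply cont_p4d].
  - apply cont_plus; [apply cont_const|apply cont_mult; [|apply cont_p4d]].
    apply cont_frame_radius; auto; [apply cont_p4c|apply cont_p4d].
  - apply cont_div; [apply cont_plus; [apply cont_square_w; [apply cont_p4a|apply cont_p4b]
      |apply cont_const]|apply cont_const|lra].
Qed.

(** * The tile and its interior as solid tori *)

Definition flatten (p : P3) : P3 :=
  squash_xy 7 1 4 3 (squash_xy 1 1 4 3 (squash_xz 4 2 2 1 p)).
Definition unflatten (p : P3) : P3 :=
  squash_xz 4 2 1 2 (squash_xy 1 1 3 4 (squash_xy 7 1 3 4 p)).

Lemma unflatten_flatten p : unflatten (flatten p) = p.
Proof. unfold unflatten, flatten; rewrite !squash_xy_inv, squash_xz_inv; auto; lra. Qed.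

Lemma flatten_unflatten p : flatten (unflatten p) = p.
Proof. unfold unflatten, flatten; rewrite squash_xz_inv, !squash_xy_inv; auto; lra. Qed.

Lemma tile_flatten p : tile p <-> frame (flatten p).
Proof.
  unfold flatten; rewrite tile_lower, tile_low_shorten_left, tile_low_left_shorten_right.
  reflexivity.
Qed.

Lemma cont_flatten p : cont_at dist3 dist3 flatten p.
Proof.
  unfold flatten; repeat (eapply cont_at_comp; [|apply cont_squash_xy; lra]).
  apply cont_squash_xz; lra.
Qed.

Lemma cont_unflatten p : cont_at dist3 dist3 unflatten p.
Proof.
  unfold unflatten; eapply cont_at_comp; [|apply cont_squash_xz; lra].
  eapply cont_at_comp; apply cont_squash_xy; lra.
Qed.

Lemma frame_off_center p : frame p -> off_center p.
Proof.
  unfold frame, cuboid, off_center; intro H.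
  destruct (Req_dec (p3x p - 4) 0); auto; right; destruct_conj_disj; lra.
Qed.

Definition tile_to_torus (p : P3) : P4 := frame_to_torus (flatten p).
Definition torus_to_tile (q : P4) : P3 := unflatten (torus_to_frame q).

Lemma torus_tile_torus p : off_center (flatten p) -> torus_to_tile (tile_to_torus p) = p.
Proof.
  intro; unfold torus_to_tile, tile_to_torus; rewrite torus_frame_torus by auto.
  apply unflatten_flatten.
Qed.

Lemma tile_torus_tile q : on_circle q -> tile_to_torus (torus_to_tile q) = q.
Proof.
  intro; unfold torus_to_tile, tile_to_torus; rewrite flatten_unflatten.
  apply frame_torus_frame; auto.
Qed.

Lemma torus_to_tile_off_center q : on_circle q -> off_center (flatten (torus_to_tile q)).
Proof.
  intro; unfold torus_to_tile; rewrite flatten_unflatten; apply torus_to_frame_off_center; auto.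
Qed.

Lemma solid_torus_tile_to_torus p : off_center (flatten p) ->
  (solid_torus (tile_to_torus p) <-> tile p).
Proof. intro; unfold tile_to_torus; rewrite solid_torus_frame_to_torus, tile_flatten; tauto. Qed.

Lemma tile_to_torus_solid p : tile p -> solid_torus (tile_to_torus p).
Proof.
  intro H; pose proof (frame_off_center _ (proj1 (tile_flatten p) H)).
  apply solid_torus_tile_to_torus; auto.
Qed.

Lemma torus_to_tile_tile q : solid_torus q -> tile (torus_to_tile q).
Proof.
  intros [Hd Hc]; apply solid_torus_tile_to_torus; [apply torus_to_tile_off_center; auto|].
  rewrite tile_torus_tile; [split|]; auto.
Qed.

Lemma tile_torus_tile_of_tile p : tile p -> torus_to_tile (tile_to_torus p) = p.
Proof. intro H; apply torus_tile_torus, frame_off_center, tile_flatten; auto. Qed.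

Lemma cont_tile_to_torus p : off_center (flatten p) -> cont_at dist3 dist4 tile_to_torus p.
Proof.
  intro; unfold tile_to_torus; eapply cont_at_comp; [apply cont_flatten|].
  apply cont_frame_to_torus; auto.
Qed.

Lemma cont_torus_to_tile q : on_circle q -> cont_at dist4 dist3 torus_to_tile q.
Proof.
  intro; unfold torus_to_tile; eapply cont_at_comp; [apply cont_torus_to_frame; auto|].
  apply cont_unflatten.
Qed.

Lemma homeomorphic34_intro (S : set3) (T : set4) f g :
  (forall p, S p -> T (f p)) -> (forall q, T q -> S (g q)) ->
  (forall p, S p -> g (f p) = p) -> (forall q, T q -> f (g q) = q) ->
  (forall p, S p -> cont_at dist3 dist4 f p) -> (forall q, T q -> cont_at dist4 dist3 g q) ->
  homeomorphic34 S T.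
Proof.
  intros HST HTS Hgf Hfg Hf Hg; exists f, g; repeat split; auto.
  - intros p Hp eps He; destruct (Hf p Hp eps He) as [d [Hd H]]; exists d; auto.
  - intros q Hq eps He; destruct (Hg q Hq eps He) as [d [Hd H]]; exists d; auto.
Qed.

Theorem tile_homeomorphic_solid_torus : homeomorphic34 tile solid_torus.
Proof.
  apply (homeomorphic34_intro _ _ tile_to_torus torus_to_tile).
  - apply tile_to_torus_solid.
  - apply torus_to_tile_tile.
  - apply tile_torus_tile_of_tile.
  - intros q [_ Hc]; apply tile_torus_tile; auto.
  - intros p H; apply cont_tile_to_torus, frame_off_center, tile_flatten; auto.
  - intros q [_ Hc]; apply cont_torus_to_tile; auto.
Qed.

Lemma off_center_near p : off_center (flatten p) ->
  exists r, 0 < r /\ forall p', dist3 p p' < r -> off_center (flatten p').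
Proof.
  intro H; destruct (cont_at_pos_near dist3
    (fun p' => norm2 (p3x (flatten p') - 4) (p3y (flatten p') - 3 / 2)) p) as [r [Hr Hnear]].
  - apply (cont_at_comp _ dist3 _ flatten (fun q => norm2 (p3x q - 4) (p3y q - 3 / 2)));
      [apply cont_flatten|].
    apply cont_norm2; apply cont_minus; auto using cont_p3x, cont_p3y, cont_const.
  - apply norm2_pos; auto.
  - exists r; split; auto; intros p' Hp'; specialize (Hnear p' Hp'); unfold off_center.
    destruct (pair_eq0_dec (p3x (flatten p') - 4) (p3y (flatten p') - 3 / 2)) as [[E1 E2]|];
      auto; rewrite E1, E2 in Hnear; unfold norm2 in Hnear.
    rewrite pow_i, Rplus_0_l, sqrt_0 in Hnear by lia; lra.
Qed.

Lemma open_solid_torus_near p : off_center (flatten p) ->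
  open_solid_torus (tile_to_torus p) -> exists r, 0 < r /\ forall p', dist3 p p' < r ->
  p4a (tile_to_torus p') ^ 2 + p4b (tile_to_torus p') ^ 2 < 1.
Proof.
  intros H [Hd _]; destruct (cont_at_pos_near dist3
    (fun p' => 1 - (p4a (tile_to_torus p') ^ 2 + p4b (tile_to_torus p') ^ 2)) p)
    as [r [Hr Hnear]]; [|lra|].
  - apply (cont_at_comp _ dist4 _ tile_to_torus (fun q => 1 - (p4a q ^ 2 + p4b q ^ 2)));
      [apply cont_tile_to_torus; auto|].
    apply cont_minus; [apply cont_const|]; simpl.
    apply cont_plus; repeat apply cont_mult; auto using cont_p4a, cont_p4b, cont_const.
  - exists r; split; auto; intros p' Hp'; specialize (Hnear p' Hp'); lra.
Qed.

(* A point of the tile mapped to the boundary of the disc factor is not interior: pushing its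
   disc coordinate slightly outwards gives points arbitrarily close to it outside the tile. *)
Lemma interior_tile_open_torus p : interior3 tile p -> open_solid_torus (tile_to_torus p).
Proof.
  intro Hint; pose proof (interior3_self _ _ Hint) as Ht; destruct Hint as [r [Hr Hball]].
  destruct (tile_to_torus_solid p Ht) as [Hd Hc]; split; auto.
  destruct (Rle_lt_or_eq _ _ Hd) as [|Hone]; auto; exfalso.
  set (q := tile_to_torus p) in *.
  destruct (cont_torus_to_tile q Hc r Hr) as [d [Hdpos Hclose]].
  set (e := d / 2); set (q' := mkP4 ((1 + e) * p4a q) ((1 + e) * p4b q) (p4c q) (p4d q)).
  assert (Hqq' : dist4 q q' < d).
  { unfold dist4, q'; cbn [p4a p4b p4c p4d].
    replace (_ + _ + _ + _) with (e ^ 2 * (p4a q ^ 2 + p4b q ^ 2)) by ring.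
    rewrite Hone, Rmult_1_r, sqrt_pow2; unfold e; lra. }
  assert (Htile : tile (torus_to_tile q')).
  { apply Hball; specialize (Hclose q' Hqq'); unfold q in Hclose at 1.
    rewrite tile_torus_tile_of_tile in Hclose; auto. }
  apply tile_to_torus_solid in Htile as [Hd' _].
  rewrite tile_torus_tile in Hd' by exact Hc; unfold q' in Hd'; cbn [p4a p4b] in Hd'.
  assert (0 < e) by (unfold e; lra); nra.
Qed.

Lemma interior_tile_iff p : interior3 tile p <-> tile p /\ open_solid_torus (tile_to_torus p).
Proof.
  split.
  - intro H; split; [apply interior3_self; auto|apply interior_tile_open_torus; auto].
  - intros [Ht Ho].
    pose proof (frame_off_center _ (proj1 (tile_flatten p) Ht)) as Hoff.
    destruct (off_center_near p Hoff) as [r1 [Hr1 H1]].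
    destruct (open_solid_torus_near p Hoff Ho) as [r2 [Hr2 H2]].
    exists (Rmin r1 r2); split; [apply Rmin_pos; auto|]; intros p' Hp'; unfold ball3 in Hp'.
    assert (Hoff' : off_center (flatten p'))
      by (apply H1; eapply Rlt_le_trans; [exact Hp'|apply Rmin_l]).
    apply solid_torus_tile_to_torus; auto; split.
    + left; apply H2; eapply Rlt_le_trans; [exact Hp'|apply Rmin_r].
    + apply (frame_to_torus_on_circle _ Hoff').
Qed.

Theorem interior_tile_homeomorphic_open_solid_torus :
  homeomorphic34 (interior3 tile) open_solid_torus.
Proof.
  apply (homeomorphic34_intro _ _ tile_to_torus torus_to_tile).
  - intros p H; apply interior_tile_iff; auto.
  - intros q Hq; assert (solid_torus q) by (destruct Hq; split; [lra|auto]).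
    apply interior_tile_iff; split; [apply torus_to_tile_tile; auto|].
    rewrite tile_torus_tile; [|apply H]; auto.
  - intros p H; apply tile_torus_tile_of_tile, interior_tile_iff; auto.
  - intros q [_ Hc]; apply tile_torus_tile; auto.
  - intros p H; apply interior_tile_iff in H as [Ht _].
    apply cont_tile_to_torus, frame_off_center, tile_flatten; auto.
  - intros q [_ Hc]; apply cont_torus_to_tile; auto.
Qed.

Definition path_in (S : set3) (p q : P3) : Prop :=
  exists g : R -> P3, g 0 = p /\ g 1 = q /\
    forall t, 0 <= t <= 1 -> S (g t) /\ cont_at dR dist3 g t.

(* The supremum of the times up to which the path stays in U can neither lie in U
   (the path would stay longer) nor in V (the path would have left U earlier). *)
Lemma path_stays_in_open (S U V : set3) (g : R -> P3) :
  open3 U -> open3 V -> (forall p, S p -> U p \/ V p) ->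
  (forall p, S p -> U p -> V p -> False) ->
  (forall t, 0 <= t <= 1 -> S (g t) /\ cont_at dR dist3 g t) -> U (g 0) -> U (g 1).
Proof.
  intros HU HV Hcov Hdis Hg H0.
  set (E := fun t => 0 <= t <= 1 /\ forall s, 0 <= s <= t -> U (g s)).
  assert (HE0 : E 0) by (split; [lra|]; intros s Hs; replace s with 0 by lra; auto).
  assert (Hb : bound E) by (exists 1; intros t [Ht _]; lra).
  destruct (completeness E Hb (ex_intro _ 0 HE0)) as [m [Hm1 Hm2]].
  assert (Hm0 : 0 <= m) by (apply Hm1; auto).
  assert (Hm1' : m <= 1) by (apply Hm2; intros t [Ht _]; lra).
  assert (Hbelow : forall s, 0 <= s < m -> U (g s)).
  { intros s Hs; destruct (classic (exists t, E t /\ s < t)) as [[t [[_ Ht] Hst]]|Hn].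
    - apply Ht; lra.
    - exfalso; assert (m <= s); [|lra].
      apply Hm2; intros t Ht; apply Rnot_lt_le; intro; apply Hn; eauto. }
  destruct (Hg m (conj Hm0 Hm1')) as [HS Hc].
  destruct (Hcov _ HS) as [HUm|HVm].
  - destruct (Req_dec m 1) as [<-|E1]; auto; exfalso.
    destruct (HU _ HUm) as [r [Hr Hball]]; destruct (Hc r Hr) as [d [Hd Hcd]].
    set (t0 := Rmin 1 (m + d / 2)).
    assert (Ht0 : t0 <= m).
    { apply Hm1; split; [unfold t0; split; [apply Rmin_glb|apply Rmin_l]; lra|].
      intros s Hs; destruct (Rlt_dec s m); [apply Hbelow; lra|].
      apply Hball; unfold ball3; apply Hcd; unfold dR; rewrite Rabs_right by lra.
      pose proof (Rmin_r 1 (m + d / 2)); unfold t0 in *; lra. }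
    unfold t0, Rmin in Ht0; destruct Rle_dec; lra.
  - exfalso; destruct (HV _ HVm) as [r [Hr Hball]]; destruct (Hc r Hr) as [d [Hd Hcd]].
    destruct (Req_dec m 0) as [E0|E0]; [rewrite E0 in HVm, HS; apply (Hdis _ HS H0 HVm)|].
    set (s := Rmax 0 (m - d / 2)).
    assert (Hs : 0 <= s < m) by (unfold s; split; [apply Rmax_l|apply Rmax_lub_lt]; lra).
    apply (Hdis (g s)); [apply Hg; lra|apply Hbelow; auto|].
    apply Hball; unfold ball3; apply Hcd; unfold dR; rewrite Rabs_left1 by lra.
    pose proof (Rmax_r 0 (m - d / 2)); unfold s in *; lra.
Qed.

Lemma connected3_of_paths (S : set3) :
  (forall p q, S p -> S q -> exists m, path_in S p m /\ path_in S m q) -> connected3 S.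
Proof.
  intros Hpaths U V HU HV Hcov Hdis [p [Sp Up]] [q [Sq Vq]].
  destruct (Hpaths p q Sp Sq) as [m [[g1 [G10 [G11 G1]]] [g2 [G20 [G21 G2]]]]].
  assert (U m) by (rewrite <- G11; apply (path_stays_in_open S U V g1); auto; rewrite G10; auto).
  assert (U q) by (rewrite <- G21; apply (path_stays_in_open S U V g2); auto; rewrite G20; auto).
  apply (Hdis q Sq); auto.
Qed.

Definition circle_dot (q1 q2 : P4) : R := p4c q1 * p4c q2 + p4d q1 * p4d q2.

Definition lerp (a b t : R) : R := (1 - t) * a + t * b.

(* Straight segment in the disc factor; in the circle factor, the normalised chord,
   defined as long as the two points on the circle are not antipodal. *)
Definition torus_segment (q1 q2 : P4) (t : R) : P4 :=
  mkP4 (lerp (p4a q1) (p4a q2) t) (lerp (p4b q1) (p4b q2) t)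
       (lerp (p4c q1) (p4c q2) t /
          norm2 (lerp (p4c q1) (p4c q2) t) (lerp (p4d q1) (p4d q2) t))
       (lerp (p4d q1) (p4d q2) t /
          norm2 (lerp (p4c q1) (p4c q2) t) (lerp (p4d q1) (p4d q2) t)).

Section TorusSegment.
Variables q1 q2 : P4.
Hypothesis q1_open : open_solid_torus q1.
Hypothesis q2_open : open_solid_torus q2.
Hypothesis not_antipodal : -1 < circle_dot q1 q2.

Lemma chord_nonzero t : 0 <= t <= 1 ->
  0 < lerp (p4c q1) (p4c q2) t ^ 2 + lerp (p4d q1) (p4d q2) t ^ 2.
Proof.
  destruct q1_open as [_ H1], q2_open as [_ H2]; intro Ht.
  replace (_ + _) with ((1 - 2 * t) ^ 2 + 2 * (t * (1 - t)) * (1 + circle_dot q1 q2))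
    by (unfold lerp, circle_dot; nra).
  destruct (Req_dec t (1 / 2)) as [->|Hn]; [nra|].
  assert (0 < (1 - 2 * t) ^ 2) by (apply pow2_gt_0; intro; apply Hn; lra).
  assert (0 <= t * (1 - t)) by nra; nra.
Qed.

Lemma torus_segment_open t : 0 <= t <= 1 -> open_solid_torus (torus_segment q1 q2 t).
Proof.
  intro Ht; pose proof (chord_nonzero t Ht) as Hpos.
  destruct q1_open as [Ha1 _], q2_open as [Ha2 _].
  unfold open_solid_torus, torus_segment; cbn [p4a p4b p4c p4d]; split.
  - unfold lerp; destruct (Req_dec t 0) as [->|]; [nra|].
    assert (0 <= t * (1 - t) * ((p4a q1 - p4a q2) ^ 2 + (p4b q1 - p4b q2) ^ 2)) by
      (apply Rmult_le_pos; [nra|]; pose proof (pow2_ge_0 (p4a q1 - p4a q2));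
       pose proof (pow2_ge_0 (p4b q1 - p4b q2)); lra).
    nra.
  - pose proof (norm2_sqr (lerp (p4c q1) (p4c q2) t) (lerp (p4d q1) (p4d q2) t)) as Hn.
    assert (0 < norm2 (lerp (p4c q1) (p4c q2) t) (lerp (p4d q1) (p4d q2) t))
      by (unfold norm2; apply sqrt_lt_R0; auto).
    transitivity ((lerp (p4c q1) (p4c q2) t ^ 2 + lerp (p4d q1) (p4d q2) t ^ 2) /
      norm2 (lerp (p4c q1) (p4c q2) t) (lerp (p4d q1) (p4d q2) t) ^ 2);
      [field|rewrite <- Hn; field]; lra.
Qed.

Lemma cont_torus_segment t : 0 <= t <= 1 -> cont_at dR dist4 (torus_segment q1 q2) t.
Proof.
  intro Ht; pose proof (chord_nonzero t Ht).
  assert (Hn : 0 < norm2 (lerp (p4c q1) (p4c q2) t) (lerp (p4d q1) (p4d q2) t))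
    by (unfold norm2; apply sqrt_lt_R0; auto).
  assert (Hl : forall a b, cont_at dR dR (lerp a b) t).
  { intros; unfold lerp; apply cont_plus; apply cont_mult;
      auto using cont_const, cont_idR, cont_minus. }
  unfold torus_segment; apply cont_mkP4; auto; apply cont_div; auto;
    try apply cont_norm2; auto; lra.
Qed.

End TorusSegment.

Lemma torus_segment_0 q1 q2 : on_circle q1 -> torus_segment q1 q2 0 = q1.
Proof.
  intro H; unfold torus_segment, lerp; rewrite !Rminus_0_r, !Rmult_1_l, !Rmult_0_l,
    !Rplus_0_r, norm2_unit by auto.
  destruct q1; simpl; f_equal; field.
Qed.

Lemma torus_segment_1 q1 q2 : on_circle q2 -> torus_segment q1 q2 1 = q2.
Proof.
  intro H; unfold torus_segment, lerp; rewrite Rminus_diag, !Rmult_1_l, !Rmult_0_l,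
    !Rplus_0_l, norm2_unit by auto.
  destruct q2; simpl; f_equal; field.
Qed.

Lemma interior_path q1 q2 : open_solid_torus q1 -> open_solid_torus q2 ->
  -1 < circle_dot q1 q2 -> path_in (interior3 tile) (torus_to_tile q1) (torus_to_tile q2).
Proof.
  intros H1 H2 Hk; exists (fun t => torus_to_tile (torus_segment q1 q2 t)).
  rewrite torus_segment_0, torus_segment_1 by (apply H1 || apply H2); repeat split; auto.
  - apply interior_tile_iff; pose proof (torus_segment_open q1 q2 H1 H2 Hk t H) as [Hd Hc].
    rewrite tile_torus_tile by auto; split; [apply torus_to_tile_tile; split|split]; auto; lra.
  - eapply cont_at_comp; [apply cont_torus_segment; auto|].
    apply cont_torus_to_tile, (torus_segment_open q1 q2 H1 H2 Hk t H).
Qed.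

Theorem interior_tile_connected : connected3 (interior3 tile).
Proof.
  apply connected3_of_paths; intros p1 p2 H1 H2.
  pose proof (proj1 (interior_tile_iff p1) H1) as [A1 O1].
  pose proof (proj1 (interior_tile_iff p2) H2) as [A2 O2].
  rewrite <- (tile_torus_tile_of_tile p1 A1), <- (tile_torus_tile_of_tile p2 A2).
  set (q1 := tile_to_torus p1) in *; set (q2 := tile_to_torus p2) in *.
  destruct O1 as [D1 C1], O2 as [D2 C2].
  destruct (Rlt_dec (-1) (circle_dot q1 q2)) as [Hk|Hk].
  - exists (torus_to_tile q2); split; apply interior_path; try split; auto.
    unfold circle_dot; lra.
  - (* for antipodal directions, go through the quarter turn of the direction of q1 *)
    set (m := mkP4 (p4a q2) (p4b q2) (- p4d q1) (p4c q1)).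
    assert (Om : open_solid_torus m) by (split; cbn [p4a p4b p4c p4d m]; [auto|nra]).
    assert (Hanti : p4c q2 = - p4c q1 /\ p4d q2 = - p4d q1).
    { apply Rnot_lt_le in Hk; unfold circle_dot in Hk.
      assert (Hsum : (p4c q1 + p4c q2)² + (p4d q1 + p4d q2)² = 0)
        by (apply Rle_antisym; [unfold Rsqr; nra|
            pose proof (Rle_0_sqr (p4c q1 + p4c q2)); pose proof (Rle_0_sqr (p4d q1 + p4d q2));
            lra]).
      apply Rplus_sqr_eq_0 in Hsum as [Hc Hd]; split; lra. }
    exists (torus_to_tile m); split; apply interior_path; try split; auto;
      unfold circle_dot, m; cbn [p4c p4d]; nra.
Qed.

(** * The rep-tile structure *)

Definition flip (p : P3) : P3 := mkP3 (p3x p) (4 - p3y p) (2 - p3z p).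

Lemma flip_flip p : flip (flip p) = p.
Proof. destruct p; unfold flip; simpl; f_equal; ring. Qed.

Lemma flip_isometry : isometry3 flip.
Proof. apply isometry3_of_sqr; intros; simpl; ring. Qed.

Lemma half_turn_flip p : half_turn (mkP3 4 2 1) (mkP3 1 0 0) p = flip p.
Proof. destruct p; unfold half_turn, flip; simpl; f_equal; ring. Qed.

Lemma box842_tile_flip p : box 8 4 2 p <-> tile p \/ tile (flip p).
Proof.
  unfold box, tile, flip, cuboid; destruct p as [x y z]; simpl; split.
  - intros [[] [[] []]].
    destruct (Rle_dec x 2); [destruct (Rle_dec z 1); [left|right]; disj_lra|].
    destruct (Rle_dec 6 x); [destruct (Rle_dec z 1); [left|right]; disj_lra|].
    destruct (Rle_dec y 1); [left; disj_lra|].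
    destruct (Rle_dec y 2); [right; disj_lra|].
    destruct (Rle_dec y 3); [left|right]; disj_lra.
  - intro; destruct_conj_disj; lra.
Qed.

Lemma tile_flip_on_planes p : tile p -> tile (flip p) ->
  p3x p = 2 \/ p3x p = 6 \/ p3y p = 1 \/ p3y p = 2 \/ p3y p = 3 \/ p3z p = 1.
Proof.
  unfold tile, flip, cuboid; destruct p as [x y z]; simpl; intros; destruct_conj_disj; disj_lra.
Qed.

(* Points of [tile] and of its flip lie on finitely many planes, which a small
   diagonal translation avoids. *)
Lemma tile_flip_interior_disjoint p :
  interior3 tile p -> interior3 (fun q => tile (flip q)) p -> False.
Proof.
  intros [r1 [Hr1 H1]] [r2 [Hr2 H2]].
  destruct (exists_avoiding [2 - p3x p; 6 - p3x p; 1 - p3y p; 2 - p3y p; 3 - p3y p; 1 - p3z p]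
    (Rmin r1 r2 / 3)) as [t [Ht Havoid]]; [apply Rdiv_lt_0_compat; [apply Rmin_pos|]; lra|].
  assert (Hball : forall r, Rmin r1 r2 <= r ->
            ball3 p r (mkP3 (p3x p + t) (p3y p + t) (p3z p + t)))
    by (intros; apply ball3_translate; rewrite Rabs_pos_eq; lra).
  pose proof (tile_flip_on_planes _ (H1 _ (Hball _ (Rmin_l _ _))) (H2 _ (Hball _ (Rmin_r _ _)))).
  apply Havoid; simpl in *; destruct_conj_disj; disj_lra.
Qed.

(* [place k i] moves [box (4 k) (2 k) k] onto the i-th of the four blocks of [k * tile]. *)
Definition place (k : R) (i : nat) (p : P3) : P3 :=
  match i with
  | O => mkP3 (p3y p) (p3x p) (p3z p)
  | 1 => mkP3 (p3x p + 2 * k) (p3z p) (p3y p)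
  | 2 => mkP3 (p3x p + 2 * k) (p3z p + 2 * k) (p3y p)
  | _ => mkP3 (p3y p + 6 * k) (p3x p) (p3z p)
  end.

Definition unplace (k : R) (i : nat) (p : P3) : P3 :=
  match i with
  | O => mkP3 (p3y p) (p3x p) (p3z p)
  | 1 => mkP3 (p3x p - 2 * k) (p3z p) (p3y p)
  | 2 => mkP3 (p3x p - 2 * k) (p3z p) (p3y p - 2 * k)
  | _ => mkP3 (p3y p) (p3x p - 6 * k) (p3z p)
  end.

Lemma unplace_place k i p : unplace k i (place k i p) = p.
Proof. destruct p, i as [|[|[|]]]; simpl; f_equal; ring. Qed.

Lemma place_unplace k i p : place k i (unplace k i p) = p.
Proof. destruct p, i as [|[|[|]]]; simpl; f_equal; ring. Qed.

Lemma place_isometry k i : isometry3 (place k i).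
Proof. apply isometry3_of_sqr; intros; destruct i as [|[|[|]]]; simpl; ring. Qed.

Lemma interior3_placed (S : set3) k i p :
  interior3 (fun q => S (unplace k i q)) p -> interior3 S (unplace k i p).
Proof.
  apply (interior3_pullback (place k i)); auto using place_isometry, place_unplace, unplace_place.
Qed.

Lemma placed_boxes_disjoint k a b c i j p : a = 4 * k -> b = 2 * k -> c = k ->
  (i < 4)%nat -> (j < 4)%nat -> i <> j ->
  interior3 (fun q => box a b c (unplace k i q)) p ->
  interior3 (fun q => box a b c (unplace k j q)) p -> False.
Proof.
  intros -> -> -> Hi Hj Hij Ii Ij.
  apply interior3_placed, interior3_cuboid in Ii, Ij.
  destruct i as [|[|[|[|]]]], j as [|[|[|[|]]]]; try lia; simpl in *; lra.
Qed.

Definition tile_box (i : nat) : set3 := fun p => box 4 2 1 (unplace 1 i p).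

Lemma tile_boxes : set_eq3 tile (fun p => exists i, (i < 4)%nat /\ tile_box i p).
Proof.
  intro p; unfold tile_box, tile, box, cuboid; split.
  - intros [H|[H|[H|H]]]; [exists 0%nat|exists 1%nat|exists 2%nat|exists 3%nat];
      split; try lia; simpl; lra.
  - intros [i [Hi H]]; destruct i as [|[|[|[|]]]]; try lia; simpl in H; disj_lra.
Qed.

Lemma tile_box_congruent i : congruent3 (box 4 2 1) (tile_box i).
Proof.
  exists (place 1 i); split; [apply place_isometry|]; intro p.
  rewrite image3_inverse by auto using place_unplace, unplace_place; tauto.
Qed.

Lemma scale2_tile p : scale3 2 tile p <-> tile (mkP3 (p3x p / 2) (p3y p / 2) (p3z p / 2)).
Proof.
  split.
  - intros [q [Hq ->]]; simpl; replace (mkP3 _ _ _) with q; auto.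
    destruct q; simpl; f_equal; field.
  - intro H; eexists; split; [exact H|]; destruct p; simpl; f_equal; field.
Qed.

Lemma scale2_tile_blocks p :
  scale3 2 tile p <-> exists i, (i < 4)%nat /\ box 8 4 2 (unplace 2 i p).
Proof.
  rewrite scale2_tile; unfold tile, box, cuboid; simpl; split.
  - intros [H|[H|[H|H]]]; [exists 0%nat|exists 1%nat|exists 2%nat|exists 3%nat];
      split; try lia; simpl; lra.
  - intros [i [Hi H]]; destruct i as [|[|[|[|]]]]; try lia; simpl in H; disj_lra.
Qed.

(* Copies [2 j] and [2 j + 1] are the tile and its flip inside block [j] of [2 * tile]. *)
Definition copy (i : nat) (p : P3) : P3 :=
  place 2 (Nat.div2 i) (if Nat.odd i then flip p else p).
Definition uncopy (i : nat) (p : P3) : P3 :=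
  if Nat.odd i then flip (unplace 2 (Nat.div2 i) p) else unplace 2 (Nat.div2 i) p.

Lemma copy_isometry i : isometry3 (copy i).
Proof.
  unfold copy; destruct (Nat.odd i).
  - apply isometry3_comp; [apply place_isometry|apply flip_isometry].
  - apply place_isometry.
Qed.

Lemma image3_copy i p : image3 (copy i) tile p <-> tile (uncopy i p).
Proof.
  apply image3_inverse; intro q; unfold copy, uncopy; destruct (Nat.odd i);
    rewrite ?unplace_place, ?flip_flip, ?place_unplace; auto.
Qed.

Lemma scale2_tile_copies :
  set_eq3 (scale3 2 tile) (fun p => exists i, (i < 8)%nat /\ image3 (copy i) tile p).
Proof.
  intro p; rewrite scale2_tile_blocks; setoid_rewrite image3_copy; split.
  - intros [j [Hj H]]; apply box842_tile_flip in H.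
    destruct j as [|[|[|[|]]]]; try lia; destruct H;
      [exists 0%nat|exists 1%nat|exists 2%nat|exists 3%nat
      |exists 4%nat|exists 5%nat|exists 6%nat|exists 7%nat]; split; auto; lia.
  - intros [i [Hi H]]; exists (Nat.div2 i); split.
    + destruct i as [|[|[|[|[|[|[|[|]]]]]]]]; simpl; lia.
    + apply box842_tile_flip; unfold uncopy in H; destruct (Nat.odd i); auto.
Qed.

Lemma copies_interior_disjoint i j : (i < 8)%nat -> (j < 8)%nat -> i <> j -> forall p,
  interior3 (image3 (copy i) tile) p -> interior3 (image3 (copy j) tile) p -> False.
Proof.
  intros Hi Hj Hij p Ii Ij.
  assert (Hblock : forall n, interior3 (image3 (copy n) tile) p ->
            interior3 (fun q => box 8 4 2 (unplace 2 (Nat.div2 n) q)) p).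
  { intros n; apply interior3_incl; intros q Hq; apply box842_tile_flip.
    apply image3_copy in Hq; unfold uncopy in Hq; destruct (Nat.odd n); auto. }
  assert (Hflip : forall n, interior3 (image3 (copy n) tile) p ->
            interior3 (fun q => tile (if Nat.odd n then flip q else q))
                      (unplace 2 (Nat.div2 n) p)).
  { intros n In; apply interior3_placed; eapply interior3_incl; [|exact In].
    intros q Hq; apply image3_copy in Hq; unfold uncopy in Hq; destruct (Nat.odd n); auto. }
  pose proof (Hblock i Ii) as Bi; pose proof (Hblock j Ij) as Bj.
  apply Hflip in Ii; apply Hflip in Ij.
  destruct i as [|[|[|[|[|[|[|[|]]]]]]]], j as [|[|[|[|[|[|[|[|]]]]]]]]; try lia;
    simpl in Ii, Ij; cbn [Nat.div2] in Bi, Bj;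
    first [ exact (tile_flip_interior_disjoint _ Ii Ij)
          | exact (tile_flip_interior_disjoint _ Ij Ii)
          | refine (placed_boxes_disjoint 2 8 4 2 _ _ p _ _ _ _ _ _ Bi Bj); lra || lia ].
Qed.
Lemma tile_closed : closed3 tile.
Proof. unfold tile; repeat apply closed3_union; apply closed3_cuboid. Qed.

Lemma tile_bounded : bounded3 tile.
Proof.
  exists 14; intros p H; eapply Rle_trans; [apply dist3_le_sum|].
  unfold tile, cuboid in H; destruct p as [x y z]; simpl in *.
  rewrite !Rminus_0_r, !Rabs_pos_eq; destruct_conj_disj; lra.
Qed.

Lemma tile_interior_nonempty : exists p, interior3 tile p.
Proof.
  exists (mkP3 1 1 (1 / 2)), (1 / 4); split; [lra|]; intros q Hq; unfold ball3 in Hq.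
  destruct (dist3_coord_le (mkP3 1 1 (1 / 2)) q) as [Hx [Hy Hz]].
  left; unfold cuboid; simpl in *; unfold Rabs in *; repeat destruct Rcase_abs;
    repeat split; lra.
Qed.

Lemma dist3_scale2 p q :
  dist3 (mkP3 (2 * p3x p) (2 * p3y p) (2 * p3z p)) (mkP3 (2 * p3x q) (2 * p3y q) (2 * p3z q))
  = 2 * dist3 p q.
Proof.
  unfold dist3; cbn [p3x p3y p3z].
  replace (_ + _ + _) with
    (2 ^ 2 * ((p3x p - p3x q) ^ 2 + (p3y p - p3y q) ^ 2 + (p3z p - p3z q) ^ 2)) by ring.
  rewrite sqrt_mult_alt, sqrt_pow2 by (simpl; lra); auto.
Qed.

Theorem tile_rep_tile : rep_tile 8 tile.
Proof.
  split; [apply tile_closed|]; split; [apply tile_bounded|].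
  split; [apply tile_interior_nonempty|].
  exists (fun i => image3 (copy i) tile); split; [|split].
  - intros i _; exists (copy i); split; [apply copy_isometry|intro; tauto].
  - apply copies_interior_disjoint.
  - exists (fun q => mkP3 (2 * p3x q) (2 * p3y q) (2 * p3z q)); split.
    + exists 2; split; [lra|apply dist3_scale2].
    + intro p; symmetry; exact (scale2_tile_copies p).
Qed.

Lemma tile_half_turn_box :
  congruent3 (box 8 4 2) (fun p => tile p \/ image3 (half_turn (mkP3 4 2 1) (mkP3 1 0 0)) tile p).
Proof.
  exists (fun p => p); split; [intros p q; auto|]; intro p.
  rewrite (image3_inverse _ flip) by (intro; rewrite half_turn_flip, flip_flip; auto).
  split; [intro; exists p; split; auto; apply box842_tile_flip; auto|].
  intros [q [Hq ->]]; apply box842_tile_flip; auto.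
Qed.

Theorem mainTheorem2 :
  exists A : set3,
    rep_tile 8 A /\
    homeomorphic34 A solid_torus /\
    connected3 (interior3 A) /\
    homeomorphic34 (interior3 A) open_solid_torus /\
    (exists Bi : nat -> set3,
        (forall i, (i < 4)%nat -> congruent3 (box 4 2 1) (Bi i)) /\
        (forall i j, (i < 4)%nat -> (j < 4)%nat -> i <> j ->
           forall p, interior3 (Bi i) p -> interior3 (Bi j) p -> False) /\
        set_eq3 A (fun p => exists i, (i < 4)%nat /\ Bi i p)) /\
    (exists c u : P3, unit3 u /\
        congruent3 (box 8 4 2) (fun p => A p \/ image3 (half_turn c u) A p)) /\
    (exists fi : nat -> (P3 -> P3),
        (forall i, (i < 8)%nat -> isometry3 (fi i)) /\
        (forall i j, (i < 8)%nat -> (j < 8)%nat -> i <> j ->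
           forall p, interior3 (image3 (fi i) A) p ->
                     interior3 (image3 (fi j) A) p -> False) /\
        set_eq3 (scale3 2 A)
          (fun p => exists i, (i < 8)%nat /\ image3 (fi i) A p)).
Proof.
  exists tile.
  split; [apply tile_rep_tile|].
  split; [apply tile_homeomorphic_solid_torus|].
  split; [apply interior_tile_connected|].
  split; [apply interior_tile_homeomorphic_open_solid_torus|].
  split; [|split].
  - exists tile_box; split; [|split].
    + intros i _; apply tile_box_congruent.
    + intros i j Hi Hj Hij p; apply (placed_boxes_disjoint 1 4 2 1 i j p); auto; lra.
    + apply tile_boxes.
  - exists (mkP3 4 2 1), (mkP3 1 0 0); split; [unfold unit3; simpl; ring|].
    apply tile_half_turn_box.
  - exists copy; split; [|split].
    + intros; apply copy_isometry.
    + apply copies_interior_disjoint.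
    + apply scale2_tile_copies.
Qed.
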